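(* Let $M \geq 1$ and let $f \colon (\mathbb{W},d_{\mathrm{par}}) \to (\mathbb{H},d)$ be an $M$-bilipschitz map. For any $\epsilon \in (0,1]$ and $C \geq 1$ there exists a constant $C' = C'(C,\epsilon,M)$ such that $$\sum_{Q \in \mathcal{B}(C,\epsilon),\ Q \subset Q_{0}} \ell(Q)^{3} \leq C'\ell(Q_{0})^{3} \quad \text{for all } Q_{0} \in \mathcal{D},$$ where $\mathcal{B}(C,\epsilon) = \{Q \in \mathcal{D} : \rho_{f}(CQ) \geq \epsilon\}$.
   Context: $\mathbb{H}$ is $\mathbb{R}^{3}$ with group law $(x_{1},y_{1},t_{1}) \cdot (x_{2},y_{2},t_{2}) = (x_{1}+x_{2},y_{1}+y_{2},t_{1}+t_{2}+\tfrac{1}{2}(x_{1}y_{2}-x_{2}y_{1}))$, metric $d(p,q) = \|q^{-1}\cdot p\|$ with $\|(x,y,t)\| = \max\{\sqrt{x^{2}+y^{2}},\sqrt{|t|}\}$, and $N(E,\delta) = \{p : \operatorname{dist}(p,E) \leq \delta\}$. A horizontal line in $\mathbb{H}$ is a set $p \cdot \{(sa,sb,0) : s \in \mathbb{R}\}$ with $p \in \mathbb{H}$, $(a,b) \neq 0$. $\mathbb{W}$ is $\mathbb{R}^{2}$ with $d_{\mathrm{par}}((y,t),(\xi,\tau)) = \max\{|y-\xi|,|t-\tau|^{1/2}\}$; horizontal lines in $\mathbb{W}$ are the sets $\mathbb{R} \times \{t\}$; $B(w,r)$ is the closed $d_{\mathrm{par}}$-ball. The ruler coefficient $\rho_{f}(B(w,r))$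 is the infimum of $\rho > 0$ such that for every horizontal line $\ell \subset \mathbb{W}$ there is a horizontal line $L \subset \mathbb{H}$ with $f(\ell \cap B(w,r)) \subset N(L,\rho r)$. $\mathcal{D}$ is the family of dyadic parabolic rectangles $Q = [k2^{-n},(k+1)2^{-n}) \times [l4^{-n},(l+1)4^{-n})$, $\ell(Q) = 2^{-n}$, $c_{Q}$ its centre, and $CQ := B(c_{Q},C\ell(Q))$. *)

From Stdlib Require Import Reals Lra List ZArith.
Open Scope R_scope.

Definition Hpt : Type := (R * R * R)%type.

Definition Hmul (p q : Hpt) : Hpt :=
  let '(x1, y1, t1) := p in let '(x2, y2, t2) := q in
  (x1 + x2, y1 + y2, t1 + t2 + / 2 * (x1 * y2 - x2 * y1)).

Definition Hinv (p : Hpt) : Hpt :=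
  let '(x, y, t) := p in (- x, - y, - t).

Definition Hnorm (p : Hpt) : R :=
  let '(x, y, t) := p in Rmax (sqrt (x ^ 2 + y ^ 2)) (sqrt (Rabs t)).

Definition Hd (p q : Hpt) : R := Hnorm (Hmul (Hinv q) p).

(* p belongs to N(E, delta) = {p : dist(p,E) <= delta}, where
   dist(p,E) = inf_{q in E} d(p,q); "inf <= delta" is unfolded. *)
Definition in_Nbhd (E : Hpt -> Prop) (delta : R) (p : Hpt) : Prop :=
  forall eta, 0 < eta -> exists q, E q /\ Hd p q < delta + eta.

Definition H_horizontal_line (L : Hpt -> Prop) : Prop :=
  exists (p : Hpt) (a b : R), (a <> 0 \/ b <> 0) /\
    forall q, L q <-> exists s : R, q = Hmul p (s * a, s * b, 0).

Definition Wpt : Type := (R * R)%type.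

Definition dpar (w z : Wpt) : R :=
  let '(y, t) := w in let '(xi, tau) := z in
  Rmax (Rabs (y - xi)) (sqrt (Rabs (t - tau))).

Definition Wball (w : Wpt) (r : R) (z : Wpt) : Prop := dpar w z <= r.

Definition bilipschitz (M : R) (f : Wpt -> Hpt) : Prop :=
  forall w z, / M * dpar w z <= Hd (f w) (f z) /\ Hd (f w) (f z) <= M * dpar w z.

Definition ruler_admissible (f : Wpt -> Hpt) (w : Wpt) (r rho : R) : Prop :=
  forall t : R, exists L, H_horizontal_line L /\
    forall y : R, Wball w r (y, t) -> in_Nbhd L (rho * r) (f (y, t)).

(* rho_f(B(w,r)) >= eps, where rho_f is the infimum of admissible rho > 0
   (infimum of the empty set = +infinity). *)
Definition ruler_ge (f : Wpt -> Hpt) (w : Wpt) (r eps : R) : Prop :=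
  forall rho, 0 < rho -> ruler_admissible f w r rho -> eps <= rho.

(* Q = (n,k,l) denotes [k 2^-n,(k+1)2^-n) x [l 4^-n,(l+1)4^-n), n,k,l in Z *)
Definition dyadic : Type := (Z * Z * Z)%type.

Definition side (Q : dyadic) : R := let '(n, _, _) := Q in powerRZ 2 (- n).

Definition dyadic_set (Q : dyadic) (w : Wpt) : Prop :=
  let '(n, k, l) := Q in let '(y, t) := w in
  IZR k * powerRZ 2 (- n) <= y < (IZR k + 1) * powerRZ 2 (- n) /\
  IZR l * powerRZ 4 (- n) <= t < (IZR l + 1) * powerRZ 4 (- n).

Definition center (Q : dyadic) : Wpt :=
  let '(n, k, l) := Q in
  ((IZR k + / 2) * powerRZ 2 (- n), (IZR l + / 2) * powerRZ 4 (- n)).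

Definition dyadic_subset (Q Q0 : dyadic) : Prop :=
  forall w, dyadic_set Q w -> dyadic_set Q0 w.

(* Q in B(C,eps)  <=>  rho_f(CQ) >= eps, with CQ = B(c_Q, C l(Q)) *)
Definition in_bad (f : Wpt -> Hpt) (C eps : R) (Q : dyadic) : Prop :=
  ruler_ge f (center Q) (C * side Q) eps.

Definition sum_cubes (s : list dyadic) : R :=
  fold_right (fun Q acc => side Q ^ 3 + acc) 0 s.

(* Along each horizontal line R x {t} of W, f is a bilipschitz curve in H.  If a
   chain of points on such a curve is only slightly longer than the distance of its
   endpoints, the horizontal projection stays in a thin ellipse around the chord, and
   the height above the horizontal line through the chord is bounded by the small
   vertical steps plus the area swept by the projection; hence the chain is close to
   a horizontal line.  So if rho_f(CQ) >= eps, then for a set of heights t of measure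
   ~ l(Q)^2 the curve at height t has, on a dyadic window of length ~ l(Q) containing
   the relevant interval (in one of two grids shifted by a third of a period), a chain
   excess ~ l(Q).  On a fixed line the excesses of all windows at all scales telescope
   to at most a constant times the length ~ l(Q0) of the line.  Integrating over the
   heights (discretised) and noting that each window and height is charged by
   boundedly many cubes gives sum l(Q)^3 <~ l(Q0)^2 * l(Q0). *)

From Stdlib Require Import Reals List ZArith.
From Stdlib Require Import Lra Lia Psatz ClassicalDescription Classical.
Open Scope R_scope.

Lemma Rabs_le_bounds (a b : R) : Rabs a <= b -> -b <= a <= b.
Proof. unfold Rabs; destruct (Rcase_abs a); intros; lra. Qed.

Lemma Rabs_le_of_sq (u c : R) : 0 <= c -> u * u <= c * c -> Rabs u <= c.
Proof.
  intros Hc H. apply Rabs_le. split.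
  - destruct (Rle_lt_dec (-c) u); auto. nra.
  - destruct (Rle_lt_dec u c); auto. nra.
Qed.

Lemma sqrt_le_of_le_sq (u c : R) : 0 <= c -> u <= c * c -> sqrt u <= c.
Proof.
  intros Hc Hu. destruct (Rle_lt_dec u 0) as [H|H].
  - rewrite (sqrt_neg_0 u H); lra.
  - rewrite <- (sqrt_square c Hc). apply sqrt_le_1_alt. lra.
Qed.

Lemma le_sq_of_sqrt_le (u c : R) : 0 <= c -> sqrt u <= c -> u <= c * c.
Proof.
  intros Hc Hs. destruct (Rle_lt_dec u 0) as [H|H].
  - nra.
  - pose proof (sqrt_sqrt u (Rlt_le _ _ H)). pose proof (sqrt_pos u). nra.
Qed.

Lemma Rdiv_nonneg (a b : R) : 0 <= a -> 0 < b -> 0 <= a / b.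
Proof. intros. apply Rle_mult_inv_pos; auto. Qed.

Lemma pow2_pos (n : nat) : 0 < 2 ^ n.
Proof. apply pow_lt; lra. Qed.

Lemma INR_pow2 (n : nat) : INR (2 ^ n) = 2 ^ n.
Proof. rewrite pow_INR. simpl. f_equal; lra. Qed.

Lemma INR_pow4 (n : nat) : INR (4 ^ n) = 4 ^ n.
Proof. rewrite pow_INR. f_equal. simpl. ring. Qed.

Lemma INR_le_pow2 (n : nat) : INR n <= 2 ^ n.
Proof.
  induction n; [simpl; lra|]. rewrite S_INR. simpl.
  assert (1 <= 2 ^ n) by (apply pow_R1_Rle; lra). lra.
Qed.

Lemma nat_above (r : R) : exists n : nat, r < INR n.
Proof. destruct (INR_archimed 1 r ltac:(lra)) as [n Hn]. exists n. lra. Qed.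

Lemma dot_cross_le (x1 y1 x2 y2 a b : R) : 0 <= a -> 0 <= b ->
  x1 * x1 + y1 * y1 <= a * a -> x2 * x2 + y2 * y2 <= b * b ->
  Rabs (x1 * x2 + y1 * y2) <= a * b /\ Rabs (x1 * y2 - x2 * y1) <= a * b.
Proof.
  intros Ha Hb H1 H2.
  assert (E : (x1 * x2 + y1 * y2) ^ 2 + (x1 * y2 - x2 * y1) ^ 2
              = (x1 * x1 + y1 * y1) * (x2 * x2 + y2 * y2)) by ring.
  assert (P : (x1 * x1 + y1 * y1) * (x2 * x2 + y2 * y2) <= (a * b) * (a * b)).
  { assert (0 <= x1 * x1 + y1 * y1) by nra. assert (0 <= x2 * x2 + y2 * y2) by nra. nra. }
  pose proof (pow2_ge_0 (x1 * x2 + y1 * y2)). pose proof (pow2_ge_0 (x1 * y2 - x2 * y1)).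
  split; apply Rabs_le_of_sq; simpl in *; nra.
Qed.

Definition enorm (x y : R) : R := sqrt (x ^ 2 + y ^ 2).

Lemma enorm_sq (x y : R) : enorm x y * enorm x y = x * x + y * y.
Proof. unfold enorm. rewrite sqrt_sqrt by nra. ring. Qed.

Lemma enorm_nonneg (x y : R) : 0 <= enorm x y.
Proof. apply sqrt_pos. Qed.

Lemma enorm_triangle (x1 y1 x2 y2 : R) :
  enorm (x1 + x2) (y1 + y2) <= enorm x1 y1 + enorm x2 y2.
Proof.
  pose proof (enorm_sq x1 y1). pose proof (enorm_sq x2 y2).
  pose proof (enorm_nonneg x1 y1). pose proof (enorm_nonneg x2 y2).
  destruct (dot_cross_le x1 y1 x2 y2 (enorm x1 y1) (enorm x2 y2)) as [C _]; try lra.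
  apply Rabs_le_bounds in C.
  unfold enorm at 1. apply sqrt_le_of_le_sq; [lra|]. nra.
Qed.

Lemma enorm_le_Hnorm (x y t : R) : enorm x y <= Hnorm (x, y, t).
Proof. apply Rmax_l. Qed.

Lemma Hnorm_nonneg (p : Hpt) : 0 <= Hnorm p.
Proof.
  destruct p as [[x y] t]. pose proof (enorm_le_Hnorm x y t).
  pose proof (enorm_nonneg x y). lra.
Qed.

Lemma Hnorm_sq_bounds (x y t : R) :
  x * x + y * y <= Hnorm (x, y, t) * Hnorm (x, y, t) /\
  Rabs t <= Hnorm (x, y, t) * Hnorm (x, y, t).
Proof.
  pose proof (Hnorm_nonneg (x, y, t)). split.
  - rewrite <- enorm_sq. pose proof (enorm_le_Hnorm x y t). pose proof (enorm_nonneg x y). nra.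
  - apply le_sq_of_sqrt_le; auto. apply Rmax_r.
Qed.

Lemma Hnorm_le (x y t c : R) : 0 <= c ->
  x * x + y * y <= c * c -> Rabs t <= c * c -> Hnorm (x, y, t) <= c.
Proof.
  intros Hc H1 H2. apply Rmax_lub; apply sqrt_le_of_le_sq; auto.
  replace (x ^ 2 + y ^ 2) with (x * x + y * y) by ring. lra.
Qed.

Lemma Hnorm_mul_le (p q : Hpt) : Hnorm (Hmul p q) <= Hnorm p + Hnorm q.
Proof.
  destruct p as [[x1 y1] t1]; destruct q as [[x2 y2] t2]. simpl Hmul.
  pose proof (Hnorm_sq_bounds x1 y1 t1) as [A1 B1].
  pose proof (Hnorm_sq_bounds x2 y2 t2) as [A2 B2].
  set (a := Hnorm (x1, y1, t1)) in *. set (b := Hnorm (x2, y2, t2)) in *.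
  assert (0 <= a) by apply Hnorm_nonneg. assert (0 <= b) by apply Hnorm_nonneg.
  destruct (dot_cross_le x1 y1 x2 y2 a b) as [C1 C2]; auto.
  apply Rabs_le_bounds in C1, C2, B1, B2.
  apply Hnorm_le; [lra|nra|]. apply Rabs_le; split; nra.
Qed.

Lemma Hd_nonneg (p q : Hpt) : 0 <= Hd p q.
Proof. apply Hnorm_nonneg. Qed.

Lemma Hd_refl (p : Hpt) : Hd p p = 0.
Proof.
  destruct p as [[x y] t]. apply Rle_antisym; [|apply Hd_nonneg].
  unfold Hd, Hmul, Hinv. apply Hnorm_le; [lra|nra|].
  replace (- t + t + / 2 * (- x * y - x * - y)) with 0 by ring. rewrite Rabs_R0. lra.
Qed.

Lemma Hd_triangle (p q r : Hpt) : Hd p r <= Hd p q + Hd q r.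
Proof.
  unfold Hd. rewrite Rplus_comm.
  replace (Hmul (Hinv r) p) with (Hmul (Hmul (Hinv r) q) (Hmul (Hinv q) p))
    by (destruct p as [[? ?] ?], q as [[? ?] ?], r as [[? ?] ?];
        unfold Hmul, Hinv; f_equal; [f_equal|]; field).
  apply Hnorm_mul_le.
Qed.

Lemma Hd_left_translate (g p q : Hpt) : Hd (Hmul g p) (Hmul g q) = Hd p q.
Proof.
  unfold Hd. f_equal.
  destruct p as [[? ?] ?], q as [[? ?] ?], g as [[? ?] ?].
  unfold Hmul, Hinv. f_equal; [f_equal|]; field.
Qed.

Lemma Hmul_inv_l (p : Hpt) : Hmul (Hinv p) p = (0, 0, 0).
Proof. destruct p as [[? ?] ?]. unfold Hmul, Hinv. f_equal; [f_equal|]; ring. Qed.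

Lemma Hmul_inv_cancel_l (p q : Hpt) : Hmul p (Hmul (Hinv p) q) = q.
Proof.
  destruct p as [[? ?] ?], q as [[? ?] ?]. unfold Hmul, Hinv. f_equal; [f_equal|]; field.
Qed.

Lemma in_Nbhd_of (L : Hpt -> Prop) (lam : R) (p q : Hpt) :
  L q -> Hd p q <= lam -> in_Nbhd L lam p.
Proof. intros Hq Hpq eta He. exists q. split; auto. lra. Qed.

Lemma in_Nbhd_triangle (L : Hpt -> Prop) (lam mu : R) (p p' : Hpt) :
  in_Nbhd L lam p -> Hd p' p <= mu -> in_Nbhd L (lam + mu) p'.
Proof.
  intros H Hpp eta He. destruct (H eta He) as [q [Lq Hq]]. exists q. split; auto.
  pose proof (Hd_triangle p' p q). lra.
Qed.

Fixpoint sumn (f : nat -> R) (n : nat) : R :=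
  match n with O => 0 | S n => sumn f n + f n end.

Lemma sumn_le (f g : nat -> R) (n : nat) :
  (forall i, (i < n)%nat -> f i <= g i) -> sumn f n <= sumn g n.
Proof.
  induction n; simpl; intros H; [lra|].
  assert (sumn f n <= sumn g n) by (apply IHn; intros; apply H; lia).
  pose proof (H n ltac:(lia)). lra.
Qed.

Lemma sumn_nonneg (f : nat -> R) (n : nat) :
  (forall i, (i < n)%nat -> 0 <= f i) -> 0 <= sumn f n.
Proof.
  intros H. apply Rle_trans with (sumn (fun _ => 0) n); [|now apply sumn_le].
  clear H. induction n; simpl; lra.
Qed.

Lemma sumn_mono (f : nat -> R) (m n : nat) :
  (forall i, 0 <= f i) -> (m <= n)%nat -> sumn f m <= sumn f n.
Proof. intros H Hmn. induction Hmn; simpl; [lra|]. pose proof (H m0). lra. Qed.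

Lemma sumn_ext (f g : nat -> R) (n : nat) :
  (forall i, (i < n)%nat -> f i = g i) -> sumn f n = sumn g n.
Proof.
  induction n; simpl; intros H; [lra|].
  rewrite IHn by (intros; apply H; lia). rewrite H by lia. reflexivity.
Qed.

Lemma sumn_plus (f g : nat -> R) (n : nat) :
  sumn (fun i => f i + g i) n = sumn f n + sumn g n.
Proof. induction n; simpl; [lra|]. rewrite IHn. lra. Qed.

Lemma sumn_scal (c : R) (f : nat -> R) (n : nat) :
  sumn (fun i => c * f i) n = c * sumn f n.
Proof. induction n; simpl; [lra|]. rewrite IHn. lra. Qed.

Lemma sumn_const (c : R) (n : nat) : sumn (fun _ => c) n = INR n * c.
Proof. induction n; simpl; [lra|]. rewrite IHn. destruct n; simpl; lra. Qed.

Lemma sumn_term_le (f : nat -> R) (n j : nat) :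
  (forall i, (i < n)%nat -> 0 <= f i) -> (j < n)%nat -> f j <= sumn f n.
Proof.
  induction n; intros H Hj; [lia|]. simpl.
  assert (0 <= sumn f n) by (apply sumn_nonneg; intros; apply H; lia).
  destruct (Nat.eq_dec j n) as [->|Hne]; [lra|].
  pose proof (IHn (fun i Hi => H i ltac:(lia)) ltac:(lia)). pose proof (H n ltac:(lia)). lra.
Qed.

Lemma sumn_swap (F : nat -> nat -> R) (a b : nat) :
  sumn (fun i => sumn (fun j => F i j) b) a = sumn (fun j => sumn (fun i => F i j) a) b.
Proof.
  induction a; simpl.
  - induction b; simpl; auto. rewrite <- IHb. lra.
  - rewrite IHa, <- sumn_plus. reflexivity.
Qed.

Lemma sumn_prefix_mul_le (c : nat -> R) (n : nat) : (forall i, 0 <= c i) ->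
  sumn (fun i => sumn c i * c i) n <= sumn c n * sumn c n / 2.
Proof. intros Hc. induction n; simpl; [lra|]. pose proof (Hc n). nra. Qed.

Lemma chain_ge_chord (p : nat -> Hpt) (n : nat) :
  Hd (p n) (p 0%nat) <= sumn (fun j => Hd (p (S j)) (p j)) n.
Proof.
  induction n; simpl; [rewrite Hd_refl; lra|].
  pose proof (Hd_triangle (p (S n)) (p n) (p 0%nat)). lra.
Qed.

(* u, v are the distances of a point with coordinates (a, b) to the foci (0, 0)
   and (D, 0) of an ellipse of major axis S. *)
Lemma ellipse_minor_bound (u v a b D S : R) : 0 <= u -> 0 <= v ->
  u * u = a * a + b * b -> v * v = (D - a) * (D - a) + b * b -> u + v <= S ->
  4 * (b * b) <= S * S - D * D.
Proof.
  intros Hu Hv E1 E2 H.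
  assert (HS : (u + v) * (u + v) <= S * S) by nra.
  assert (UV : a * (D - a) + b * b <= u * v).
  { destruct (Rle_lt_dec (a * (D - a) + b * b) 0) as [N|P]; [nra|].
    assert ((a * (D - a) + b * b) * (a * (D - a) + b * b) <= (u * v) * (u * v)).
    { replace ((u * v) * (u * v)) with ((u * u) * (v * v)) by ring. rewrite E1, E2.
      pose proof (pow2_ge_0 (a * b - (D - a) * b)). simpl in *. nra. }
    assert (0 <= u * v) by nra. nra. }
  nra.
Qed.

Section ChainFromOrigin.

Variables (x y t : nat -> R) (N : nat).
Hypotheses (Hx0 : x 0%nat = 0) (Hy0 : y 0%nat = 0) (Ht0 : t 0%nat = 0).

Definition chain_pt (j : nat) : Hpt := (x j, y j, t j).
Definition dx (j : nat) : R := x (S j) - x j.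
Definition dy (j : nat) : R := y (S j) - y j.
Definition dt (j : nat) : R := t (S j) - t j - / 2 * (x j * y (S j) - x (S j) * y j).
Definition step (j : nat) : R := Hd (chain_pt (S j)) (chain_pt j).
Definition hstep (j : nat) : R := enorm (dx j) (dy j).

Lemma step_eq (j : nat) : step j = Hnorm (dx j, dy j, dt j).
Proof. unfold step, Hd, chain_pt, Hmul, Hinv, dx, dy, dt. f_equal. f_equal; [f_equal|]; ring. Qed.

Lemma hstep_nonneg (j : nat) : 0 <= hstep j.
Proof. apply enorm_nonneg. Qed.

Lemma hstep_le_step (j : nat) : hstep j <= step j.
Proof. rewrite step_eq. apply enorm_le_Hnorm. Qed.

Lemma dt_le_step_sq (j : nat) : Rabs (dt j) <= step j * step j.
Proof. rewrite step_eq. apply Hnorm_sq_bounds. Qed.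

Lemma horiz_chord_le (j k : nat) : (j <= k)%nat ->
  enorm (x k - x j) (y k - y j) <= sumn hstep k - sumn hstep j.
Proof.
  intros Hjk. induction Hjk.
  - unfold enorm. replace ((x j - x j) ^ 2 + (y j - y j) ^ 2) with 0 by ring.
    rewrite sqrt_0. lra.
  - simpl. pose proof (enorm_triangle (x m - x j) (y m - y j) (dx m) (dy m)) as T.
    replace (x m - x j + dx m) with (x (S m) - x j) in T by (unfold dx; ring).
    replace (y m - y j + dy m) with (y (S m) - y j) in T by (unfold dy; ring).
    fold (hstep m) in T. lra.
Qed.

Lemma horiz_norm_le (k : nat) : enorm (x k) (y k) <= sumn hstep k.
Proof.
  pose proof (horiz_chord_le 0 k ltac:(lia)) as H. rewrite Hx0, Hy0 in H. simpl in H.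
  rewrite !Rminus_0_r in H. lra.
Qed.

(* The height is the sum of the vertical steps plus the swept area. *)
Lemma height_le (j : nat) :
  Rabs (t j) <= sumn (fun i => Rabs (dt i)) j + / 2 * sumn (fun i => sumn hstep i * hstep i) j.
Proof.
  induction j; simpl; [rewrite Ht0, Rabs_R0; lra|].
  assert (E : t (S j) = t j + dt j + / 2 * (x j * dy j - dx j * y j))
    by (unfold dt, dx, dy; field).
  rewrite E.
  pose proof (enorm_sq (x j) (y j)). pose proof (enorm_sq (dx j) (dy j)).
  pose proof (enorm_nonneg (x j) (y j)). pose proof (enorm_nonneg (dx j) (dy j)).
  destruct (dot_cross_le (x j) (y j) (dx j) (dy j) (enorm (x j) (y j)) (enorm (dx j) (dy j)))
    as [_ C2]; try lra.
  pose proof (horiz_norm_le j). fold (hstep j) in *. pose proof (hstep_nonneg j).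
  assert (Rabs (x j * dy j - dx j * y j) <= sumn hstep j * hstep j)
    by (eapply Rle_trans; [apply C2|]; apply Rmult_le_compat_r; auto).
  pose proof (Rabs_triang (t j + dt j) (/ 2 * (x j * dy j - dx j * y j))).
  pose proof (Rabs_triang (t j) (dt j)).
  rewrite Rabs_mult, (Rabs_pos_eq (/ 2)) in * by lra. lra.
Qed.

Variables (D delta e kappa lam : R).
Hypotheses (HD : Hnorm (chain_pt N) = D) (HDpos : 0 < D)
  (Hdel0 : 0 <= delta) (Hdel : delta <= D / 2)
  (He0 : 0 <= e) (He : e <= D / 8) (Hk0 : 0 <= kappa) (Hk : D * delta <= kappa * kappa)
  (Hkl : kappa <= lam) (Hlam : (e + kappa) * (D + delta) <= lam * lam)
  (Hlength : sumn step N <= D + delta) (Hstep : forall j, (j < N)%nat -> step j <= e).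

Lemma hlength_le : sumn hstep N <= D + delta.
Proof. pose proof (sumn_le hstep step N (fun i _ => hstep_le_step i)). lra. Qed.

Lemma sum_dt_le (j : nat) : (j <= N)%nat -> sumn (fun i => Rabs (dt i)) j <= e * (D + delta).
Proof.
  intros Hj. apply Rle_trans with (sumn (fun i => e * step i) j).
  - apply sumn_le. intros i Hi. pose proof (dt_le_step_sq i). pose proof (Hstep i ltac:(lia)).
    assert (0 <= step i) by apply Hd_nonneg. nra.
  - rewrite sumn_scal. apply Rmult_le_compat_l; auto.
    pose proof (sumn_mono step j N (fun i => Hd_nonneg _ _) Hj). lra.
Qed.

Lemma endpoint_enorm : enorm (x N) (y N) = D.
Proof.
  assert (Ht : Rabs (t N) < D * D).
  { pose proof (height_le N). pose proof (sum_dt_le N (le_n _)).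
    pose proof (sumn_prefix_mul_le hstep N hstep_nonneg). pose proof hlength_le.
    assert (0 <= sumn hstep N) by (apply sumn_nonneg; intros; apply hstep_nonneg).
    assert (sumn hstep N * sumn hstep N <= (D + delta) * (D + delta)) by nra.
    nra. }
  revert HD. unfold chain_pt, Hnorm, Rmax. fold (enorm (x N) (y N)).
  destruct (Rle_dec (enorm (x N) (y N)) (sqrt (Rabs (t N)))); auto.
  intros <-. rewrite sqrt_sqrt in Ht by apply Rabs_pos. lra.
Qed.

Definition ux : R := x N / D.
Definition uy : R := y N / D.
Definition along (j : nat) : R := x j * ux + y j * uy.
Definition across (j : nat) : R := ux * y j - x j * uy.

Lemma unit_dir : ux * ux + uy * uy = 1.
Proof.
  pose proof (enorm_sq (x N) (y N)) as H. rewrite endpoint_enorm in H. unfold ux, uy.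
  transitivity ((x N * x N + y N * y N) / (D * D)); [field; lra|]. rewrite <- H. field. lra.
Qed.

(* Small excess of the horizontal length confines the chain to a thin ellipse. *)
Lemma across_sq_le (j : nat) : (j <= N)%nat -> across j * across j <= kappa * kappa.
Proof.
  intros Hj.
  pose proof (horiz_norm_le j). pose proof (horiz_chord_le j N Hj). pose proof hlength_le.
  pose proof unit_dir as U.
  assert (XN : x N = D * ux) by (unfold ux; field; lra).
  assert (YN : y N = D * uy) by (unfold uy; field; lra).
  assert (E1 : enorm (x j) (y j) * enorm (x j) (y j) = along j * along j + across j * across j).
  { rewrite enorm_sq. transitivity ((x j * x j + y j * y j) * (ux * ux + uy * uy));
      [rewrite U; ring|unfold along, across; ring]. }
  assert (E2 : enorm (x N - x j) (y N - y j) * enorm (x N - x j) (y N - y j)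
               = (D - along j) * (D - along j) + across j * across j).
  { rewrite enorm_sq, XN, YN.
    transitivity (D * D * (ux * ux + uy * uy) - 2 * D * along j + (x j * x j + y j * y j));
      [unfold along; ring|].
    transitivity (D * D - 2 * D * along j + (x j * x j + y j * y j) * (ux * ux + uy * uy));
      [rewrite U; ring|unfold along, across; ring]. }
  pose proof (ellipse_minor_bound _ _ _ _ D (D + delta) (enorm_nonneg _ _) (enorm_nonneg _ _)
    E1 E2 ltac:(lra)). nra.
Qed.

Lemma along_step_le (j : nat) : Rabs (along (S j) - along j) <= hstep j.
Proof.
  pose proof unit_dir. pose proof (enorm_sq (dx j) (dy j)). pose proof (enorm_nonneg (dx j) (dy j)).
  destruct (dot_cross_le (dx j) (dy j) ux uy (enorm (dx j) (dy j)) 1) as [C _]; try lra.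
  replace (along (S j) - along j) with (dx j * ux + dy j * uy) by (unfold along, dx, dy; ring).
  unfold hstep. lra.
Qed.

(* The height of the chain above the horizontal line through 0 in direction (ux, uy);
   by unit_dir it is the height of (along j * ux, along j * uy, 0)^-1 * chain_pt j. *)
Definition line_height (j : nat) : R := t j - / 2 * (along j * across j).

Lemma line_height_step (j : nat) : line_height (S j) - line_height j
  = dt j - / 2 * (across j + across (S j)) * (along (S j) - along j).
Proof.
  assert (Om : along j * across (S j) - across j * along (S j) = x j * y (S j) - x (S j) * y j).
  { transitivity ((x j * y (S j) - x (S j) * y j) * (ux * ux + uy * uy));
      [unfold along, across; ring|rewrite unit_dir; ring]. }
  unfold line_height, dt. rewrite <- Om. ring.
Qed.

Lemma line_height_le (j : nat) : (j <= N)%nat ->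
  Rabs (line_height j) <= sumn (fun i => Rabs (dt i) + kappa * hstep i) j.
Proof.
  induction j; intros Hj; simpl.
  - unfold line_height, along, across. rewrite Hx0, Hy0, Ht0.
    replace (0 - / 2 * ((0 * ux + 0 * uy) * (ux * 0 - 0 * uy))) with 0 by ring.
    rewrite Rabs_R0; lra.
  - replace (line_height (S j)) with (line_height j + (line_height (S j) - line_height j)) by ring.
    rewrite line_height_step.
    pose proof (IHj ltac:(lia)).
    assert (B1 : Rabs (across j) <= kappa) by (apply Rabs_le_of_sq, across_sq_le; auto; lia).
    assert (B2 : Rabs (across (S j)) <= kappa) by (apply Rabs_le_of_sq, across_sq_le; auto).
    pose proof (along_step_le j).
    assert (Rabs (/ 2 * (across j + across (S j)) * (along (S j) - along j)) <= kappa * hstep j).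
    { rewrite !Rabs_mult, (Rabs_pos_eq (/ 2)) by lra.
      pose proof (Rabs_triang (across j) (across (S j))).
      apply Rle_trans with (/ 2 * (2 * kappa) * hstep j); [|lra].
      apply Rmult_le_compat; try lra; auto using Rabs_pos.
      pose proof (Rabs_pos (across j + across (S j))). lra. }
    pose proof (Rabs_triang (line_height j)
      (dt j - / 2 * (across j + across (S j)) * (along (S j) - along j))).
    pose proof (Rabs_triang (dt j) (- (/ 2 * (across j + across (S j)) * (along (S j) - along j)))).
    rewrite Rabs_Ropp in *. unfold Rminus in *. lra.
Qed.

Lemma chain_from_origin_near_line :
  (ux <> 0 \/ uy <> 0) /\
  forall j, (j <= N)%nat -> Hd (chain_pt j) (along j * ux, along j * uy, 0) <= lam.
Proof.
  pose proof unit_dir as U. split.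
  { destruct (Req_dec ux 0) as [E1|]; [|auto]. destruct (Req_dec uy 0) as [E2|]; [|auto].
    rewrite E1, E2 in U. lra. }
  intros j Hj. unfold Hd, chain_pt, Hmul, Hinv. apply Hnorm_le.
  - pose proof (sumn_nonneg hstep N (fun i _ => hstep_nonneg i)). lra.
  - replace ((- (along j * ux) + x j) * (- (along j * ux) + x j)
             + (- (along j * uy) + y j) * (- (along j * uy) + y j))
      with (across j * across j + (1 - (ux * ux + uy * uy))
            * (x j * x j + y j * y j - along j * along j)) by (unfold along, across; ring).
    rewrite U. pose proof (across_sq_le j Hj). nra.
  - replace (- 0 + t j + / 2 * (- (along j * ux) * y j - x j * - (along j * uy)))
      with (line_height j) by (unfold line_height, across; ring).
    pose proof (line_height_le j Hj) as HV. rewrite sumn_plus, sumn_scal in HV.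
    pose proof (sum_dt_le j Hj). pose proof (sumn_mono hstep j N hstep_nonneg Hj).
    pose proof hlength_le. nra.
Qed.

End ChainFromOrigin.

(* kappa bounds the distance of the horizontal projection of the chain from its
   chord; the ellipse bound needs kappa^2 >= D delta. *)
Lemma chain_near_horizontal_line (p : nat -> Hpt) (N : nat) (D delta e kappa lam : R) :
  Hd (p N) (p 0%nat) = D -> 0 < D -> 0 <= delta <= D / 2 -> 0 <= e <= D / 8 ->
  0 <= kappa -> D * delta <= kappa * kappa -> kappa <= lam ->
  (e + kappa) * (D + delta) <= lam * lam ->
  sumn (fun j => Hd (p (S j)) (p j)) N <= D + delta ->
  (forall j, (j < N)%nat -> Hd (p (S j)) (p j) <= e) ->
  exists L, H_horizontal_line L /\ forall j, (j <= N)%nat -> in_Nbhd L lam (p j).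
Proof.
  intros HD HDpos [Hdel0 Hdel] [He0 He] Hk0 Hk Hkl Hlam Hlength Hstep.
  set (q := fun j => Hmul (Hinv (p 0%nat)) (p j)).
  set (x := fun j => fst (fst (q j))). set (y := fun j => snd (fst (q j))).
  set (t := fun j => snd (q j)).
  assert (Hq : forall j, chain_pt x y t j = q j)
    by (intros j; unfold chain_pt, x, y, t; destruct (q j) as [[? ?] ?]; reflexivity).
  assert (Hq0 : q 0%nat = (0, 0, 0)) by apply Hmul_inv_l.
  assert (Hstep_eq : forall j, step x y t j = Hd (p (S j)) (p j))
    by (intros j; unfold step; rewrite !Hq; apply Hd_left_translate).
  destruct (chain_from_origin_near_line x y t N
    ltac:(unfold x; rewrite Hq0; reflexivity) ltac:(unfold y; rewrite Hq0; reflexivity)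
    ltac:(unfold t; rewrite Hq0; reflexivity) D delta e kappa lam)
    as [Hdir Hnear]; try lra.
  - rewrite Hq. exact HD.
  - rewrite (sumn_ext _ (fun j => Hd (p (S j)) (p j))) by (intros; apply Hstep_eq). lra.
  - intros j Hj. rewrite Hstep_eq. auto.
  - set (u := ux x N D). set (v := uy y N D).
    exists (fun r => exists s, r = Hmul (p 0%nat) (s * u, s * v, 0)). split.
    + exists (p 0%nat), u, v. split; [exact Hdir|]. tauto.
    + intros j Hj. set (a := along x y N D j).
      apply in_Nbhd_of with (Hmul (p 0%nat) (a * u, a * v, 0)); [eexists; reflexivity|].
      pose proof (Hnear j Hj) as H. rewrite Hq in H.
      rewrite <- (Hd_left_translate (p 0%nat)) in H. unfold q in H.
      rewrite Hmul_inv_cancel_l in H. exact H.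
Qed.

Definition bilip_curve (M : R) (g : R -> Hpt) : Prop :=
  forall u v, / M * Rabs (u - v) <= Hd (g u) (g v) /\ Hd (g u) (g v) <= M * Rabs (u - v).

Definition node (a G : R) (N j : nat) : R := a + INR j * (G / INR N).

Definition chain_length (g : R -> Hpt) (a G : R) (N : nat) : R :=
  sumn (fun j => Hd (g (node a G N (S j))) (g (node a G N j))) N.

Definition chain_excess (g : R -> Hpt) (a G : R) (N : nat) : R :=
  chain_length g a G N - Hd (g (a + G)) (g a).

Lemma node_0 (a G : R) (N : nat) : node a G N 0 = a.
Proof. unfold node. simpl. ring. Qed.

Lemma node_last (a G : R) (N : nat) : (0 < N)%nat -> node a G N N = a + G.
Proof. intros HN. unfold node. field. apply not_0_INR. lia. Qed.

Lemma chain_excess_nonneg (g : R -> Hpt) (a G : R) (N : nat) :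
  (0 < N)%nat -> 0 <= chain_excess g a G N.
Proof.
  intros HN. unfold chain_excess, chain_length.
  pose proof (chain_ge_chord (fun j => g (node a G N j)) N) as H. simpl in H.
  rewrite node_last, node_0 in H by auto. lra.
Qed.

Lemma near_nat (N : nat) (u : R) : 0 <= u <= INR N ->
  exists j, (j <= N)%nat /\ Rabs (u - INR j) <= 1.
Proof.
  revert u. induction N; intros u Hu.
  - exists 0%nat. split; auto. simpl in *. rewrite Rminus_0_r, Rabs_pos_eq; lra.
  - destruct (Rle_lt_dec u (INR N)) as [H|H].
    + destruct (IHN u) as [j [Hj1 Hj2]]; [lra|]. exists j; split; auto.
    + exists (S N). split; auto. rewrite S_INR in *. apply Rabs_le; lra.
Qed.

Definition flat_kappa (M rho : R) : R := rho * rho / (16 * M).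
Definition flat_threshold (M rho : R) : R := flat_kappa M rho * flat_kappa M rho / M.

Lemma flat_kappa_bounds (M rho : R) : 1 <= M -> 0 < rho <= 1 ->
  0 < flat_kappa M rho /\ flat_kappa M rho <= 1 / 16 /\ flat_kappa M rho <= rho / 2.
Proof.
  intros HM Hrho. unfold flat_kappa. repeat split.
  - apply Rdiv_lt_0_compat; nra.
  - apply Rmult_le_reg_r with (16 * M); [lra|]. field_simplify; nra.
  - apply Rmult_le_reg_r with (16 * M); [lra|]. field_simplify; nra.
Qed.

Lemma chain_near_line_of_small_excess (p : nat -> Hpt) (N : nat) (M rho G : R) :
  1 <= M -> 0 < rho <= 1 -> 0 < G -> G / M <= Hd (p N) (p 0%nat) <= M * G ->
  (forall j, (j < N)%nat -> Hd (p (S j)) (p j) <= flat_kappa M rho * G) ->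
  sumn (fun j => Hd (p (S j)) (p j)) N <= Hd (p N) (p 0%nat) + flat_threshold M rho * G ->
  exists L, H_horizontal_line L /\ forall j, (j <= N)%nat -> in_Nbhd L (rho * G / 2) (p j).
Proof.
  intros HM Hrho HG HD Hstep Hlength.
  destruct (flat_kappa_bounds M rho HM Hrho) as [Hk0 [Hk1 Hk2]].
  unfold flat_threshold in Hlength. set (k := flat_kappa M rho) in *.
  set (D := Hd (p N) (p 0%nat)) in *.
  assert (HGM : 0 < G / M <= G)
    by (split; [apply Rdiv_lt_0_compat|apply Rmult_le_reg_r with M; [|field_simplify]]; nra).
  assert (Hdelta : 0 <= k * k / M * G <= D / 2).
  { replace (k * k / M * G) with (k * k * (G / M)) by (field; lra).
    assert (k * k <= 1 / 2) by nra. split; [nra|].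
    apply Rle_trans with (1 / 2 * (G / M)); [apply Rmult_le_compat_r|]; lra. }
  assert (He : 0 <= k * G <= D / 8).
  { assert (k * G = rho * rho * (G / M) / 16) by (unfold k, flat_kappa; field; lra).
    assert (rho * rho <= 1) by nra. assert (rho * rho * (G / M) <= G / M) by nra.
    split; nra. }
  assert (Hkappa : D * (k * k / M * G) <= k * G * (k * G)).
  { apply Rle_trans with (M * G * (k * k / M * G)); [apply Rmult_le_compat_r; [|lra]|].
    - apply Rmult_le_pos; [apply Rdiv_nonneg|]; nra.
    - right. field. lra. }
  assert (Hlam : (k * G + k * G) * (D + k * k / M * G) <= rho * G / 2 * (rho * G / 2)).
  { apply Rle_trans with ((2 * k * G) * (2 * M * G)); [apply Rmult_le_compat; nra|].
    unfold k, flat_kappa. right. field. lra. }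
  apply (chain_near_horizontal_line p N D (k * k / M * G) (k * G) (k * G)); auto; nra.
Qed.

Lemma flat_of_small_excess (M rho a G : R) (N : nat) (g : R -> Hpt) :
  1 <= M -> 0 < rho <= 1 -> 16 * (M * M) <= INR N * (rho * rho) ->
  bilip_curve M g -> 0 < G -> chain_excess g a G N < flat_threshold M rho * G ->
  exists L, H_horizontal_line L /\ forall y, a <= y <= a + G -> in_Nbhd L (rho * G) (g y).
Proof.
  intros HM Hrho HN Hg HG Hexc.
  set (h := G / INR N). set (p := fun j => g (node a G N j)).
  assert (HNpos : 0 < INR N) by nra.
  assert (HNnat : (0 < N)%nat) by (apply INR_lt; simpl; lra).
  assert (Hh : 0 < h) by (apply Rdiv_lt_0_compat; lra).
  assert (Hdist : forall u v, Rabs (u - v) <= h -> Hd (g u) (g v) <= rho * G / 2).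
  { intros u v Huv. destruct (Hg u v) as [_ U]. eapply Rle_trans; [apply U|].
    destruct (flat_kappa_bounds M rho HM Hrho) as [_ [_ Hk]].
    apply Rle_trans with (M * h); [apply Rmult_le_compat_l; lra|].
    apply Rle_trans with (flat_kappa M rho * G); [|nra].
    unfold h, flat_kappa. apply Rmult_le_reg_r with (16 * M * INR N); [nra|].
    field_simplify; nra. }
  assert (Hstep : forall j, Hd (p (S j)) (p j) <= flat_kappa M rho * G).
  { intros j. destruct (Hg (node a G N (S j)) (node a G N j)) as [_ U].
    unfold p. eapply Rle_trans; [apply U|]. unfold node. rewrite S_INR. fold h.
    replace (a + (INR j + 1) * h - (a + INR j * h)) with h by ring.
    rewrite Rabs_pos_eq by lra. unfold h, flat_kappa.
    apply Rmult_le_reg_r with (16 * M * INR N); [nra|]. field_simplify; nra. }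
  assert (HD : G / M <= Hd (p N) (p 0%nat) <= M * G).
  { unfold p. rewrite node_last, node_0 by auto. destruct (Hg (a + G) a) as [U V].
    replace (a + G - a) with G in * by ring. rewrite Rabs_pos_eq in * by lra.
    unfold Rdiv. rewrite Rmult_comm. lra. }
  destruct (chain_near_line_of_small_excess p N M rho G HM Hrho HG HD (fun j _ => Hstep j))
    as [L [HL Hnear]].
  { unfold chain_excess, chain_length in Hexc. unfold p. cbv beta.
    rewrite node_last, node_0 by auto. lra. }
  exists L. split; auto. intros z Hz.
  destruct (near_nat N ((z - a) / h)) as [j [Hj Hjz]].
  { split; [apply Rdiv_nonneg; lra|]. apply Rmult_le_reg_r with h; auto.
    unfold h. field_simplify; lra. }
  replace (rho * G) with (rho * G / 2 + rho * G / 2) by field.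
  apply in_Nbhd_triangle with (p j); [apply Hnear; auto|]. apply Hdist.
  unfold node. fold h. replace (z - (a + INR j * h)) with (((z - a) / h - INR j) * h)
    by (field; lra).
  rewrite Rabs_mult, (Rabs_pos_eq h) by lra. nra.
Qed.

Lemma sumn_add_len (F : nat -> R) (n k : nat) :
  sumn F (n + k) = sumn F n + sumn (fun j => F (n + j)%nat) k.
Proof.
  induction k; simpl; [rewrite Nat.add_0_r; lra|].
  rewrite Nat.add_succ_r. simpl. rewrite IHk. lra.
Qed.

Lemma sumn_blocks (F : nat -> R) (A B : nat) :
  sumn (fun u => sumn (fun w => F (u * B + w)%nat) B) A = sumn F (A * B).
Proof.
  induction A; simpl; auto. rewrite IHA. replace (B + A * B)%nat with (A * B + B)%nat by lia.
  rewrite sumn_add_len. reflexivity.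
Qed.

Lemma sumn_telescope (T : nat -> R) (n : nat) : sumn (fun d => T (S d) - T d) n = T n - T 0%nat.
Proof. induction n; simpl; [lra|]. rewrite IHn. lra. Qed.

Lemma sumn_gap_le (T : nat -> R) (B : R) (m n : nat) :
  (forall d, 0 <= T d <= B) -> sumn (fun d => T (d + m)%nat - T d) n <= INR m * B.
Proof.
  revert T. induction m as [|m IH]; intros T HT.
  - rewrite (sumn_ext _ (fun _ => 0)) by (intros; rewrite Nat.add_0_r; ring).
    rewrite sumn_const. simpl. lra.
  - rewrite (sumn_ext _ (fun d => (T (S (d + m)) - T (S d)) + (T (S d) - T d)))
      by (intros d _; rewrite Nat.add_succ_r; ring).
    rewrite sumn_plus, sumn_telescope, S_INR.
    specialize (IH (fun k => T (S k)) (fun d => HT (S d))). cbv beta in IH.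
    pose proof (HT n). pose proof (HT 0%nat). lra.
Qed.

Definition grid_pt (al H0 : R) (d v : nat) : R := al + INR v * (H0 / 2 ^ d).

Definition grid_length (g : R -> Hpt) (al H0 : R) (Wc d : nat) : R :=
  sumn (fun v => Hd (g (grid_pt al H0 d (S v))) (g (grid_pt al H0 d v))) (Wc * 2 ^ d).

Definition window_excess (g : R -> Hpt) (al H0 : R) (m d u : nat) : R :=
  chain_excess g (grid_pt al H0 d u) (H0 / 2 ^ d) (2 ^ m).

Lemma window_excess_nonneg (g : R -> Hpt) (al H0 : R) (m d u : nat) :
  0 <= window_excess g al H0 m d u.
Proof. apply chain_excess_nonneg. pose proof (Nat.pow_nonzero 2 m). lia. Qed.

Lemma sum_window_excess (g : R -> Hpt) (al H0 : R) (Wc m d : nat) :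
  sumn (fun u => window_excess g al H0 m d u) (Wc * 2 ^ d)
  = grid_length g al H0 Wc (d + m) - grid_length g al H0 Wc d.
Proof.
  unfold window_excess, chain_excess, grid_length. unfold Rminus. rewrite sumn_plus. f_equal.
  - unfold chain_length.
    rewrite Nat.pow_add_r, Nat.mul_assoc, <- (sumn_blocks _ (Wc * 2 ^ d) (2 ^ m)).
    apply sumn_ext. intros u _. apply sumn_ext. intros w _.
    assert (E : forall k, node (grid_pt al H0 d u) (H0 / 2 ^ d) (2 ^ m) k
                          = grid_pt al H0 (d + m) (u * 2 ^ m + k)).
    { intros k. unfold node, grid_pt.
      rewrite INR_pow2, plus_INR, mult_INR, INR_pow2, pow_add.
      field. split; apply pow_nonzero; lra. }
    rewrite !E. replace (u * 2 ^ m + S w)%nat with (S (u * 2 ^ m + w)) by lia. reflexivity.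
  - symmetry.
    transitivity
      (-1 * sumn (fun v => Hd (g (grid_pt al H0 d (S v))) (g (grid_pt al H0 d v))) (Wc * 2 ^ d));
      [ring|].
    rewrite <- sumn_scal. apply sumn_ext. intros v _. unfold grid_pt. rewrite S_INR.
    replace (al + INR v * (H0 / 2 ^ d) + H0 / 2 ^ d) with (al + (INR v + 1) * (H0 / 2 ^ d))
      by ring.
    ring.
Qed.

Lemma grid_length_bounds (g : R -> Hpt) (M al H0 : R) (Wc d : nat) : 0 <= H0 ->
  (forall u v, Hd (g u) (g v) <= M * Rabs (u - v)) ->
  0 <= grid_length g al H0 Wc d <= INR Wc * M * H0.
Proof.
  intros HH Hg. unfold grid_length. split.
  - apply sumn_nonneg. intros; apply Hd_nonneg.
  - apply Rle_trans with (sumn (fun _ => M * (H0 / 2 ^ d)) (Wc * 2 ^ d)).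
    + apply sumn_le. intros v _. eapply Rle_trans; [apply Hg|]. unfold grid_pt. rewrite S_INR.
      replace (al + (INR v + 1) * (H0 / 2 ^ d) - (al + INR v * (H0 / 2 ^ d))) with (H0 / 2 ^ d)
        by ring.
      rewrite Rabs_pos_eq; [lra|]. apply Rdiv_nonneg; auto. apply pow2_pos.
    + rewrite sumn_const, mult_INR, INR_pow2. right. field. apply pow_nonzero; lra.
Qed.

Lemma window_excess_packing (g : R -> Hpt) (M al H0 : R) (Wc m Dm : nat) : 0 <= H0 ->
  (forall u v, Hd (g u) (g v) <= M * Rabs (u - v)) ->
  sumn (fun d => sumn (fun u => window_excess g al H0 m d u) (Wc * 2 ^ d)) Dm
  <= INR m * (INR Wc * M * H0).
Proof.
  intros HH Hg.
  rewrite (sumn_ext _ (fun d => grid_length g al H0 Wc (d + m) - grid_length g al H0 Wc d))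
    by (intros; apply sum_window_excess).
  apply sumn_gap_le. intros; apply grid_length_bounds; auto.
Qed.

Definition indic (P : Prop) : R := if excluded_middle_informative P then 1 else 0.

Lemma indic_true (P : Prop) : P -> indic P = 1.
Proof. intros H. unfold indic. destruct (excluded_middle_informative P); tauto. Qed.

Lemma indic_false (P : Prop) : ~ P -> indic P = 0.
Proof. intros H. unfold indic. destruct (excluded_middle_informative P); tauto. Qed.

Lemma indic_bounds (P : Prop) : 0 <= indic P <= 1.
Proof. unfold indic. destruct (excluded_middle_informative P); lra. Qed.

Lemma indic_le (P Q : Prop) : (P -> Q) -> indic P <= indic Q.
Proof.
  intros H. unfold indic.
  destruct (excluded_middle_informative P), (excluded_middle_informative Q); try lra. tauto.
Qed.

Lemma count_interval_le_aux (A B : R) (N : nat) :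
  sumn (fun i => indic (A <= INR i <= B)) N <= Rmax 0 (Rmin B (INR N - 1) - A + 1).
Proof.
  induction N; cbn [sumn]; [apply Rmax_l|]. rewrite S_INR.
  destruct (excluded_middle_informative (A <= INR N <= B)) as [H|H];
    [rewrite indic_true by auto|rewrite indic_false by auto];
    unfold Rmax, Rmin in *; repeat destruct Rle_dec; lra.
Qed.

Lemma count_interval_le (A B : R) (N : nat) :
  sumn (fun i => indic (A <= INR i <= B)) N <= Rmax 0 (B - A + 1).
Proof.
  eapply Rle_trans; [apply count_interval_le_aux|]. unfold Rmax, Rmin. repeat destruct Rle_dec; lra.
Qed.

Lemma count_interval_ge (A B : R) (N : nat) : 0 <= A ->
  Rmin B (INR N) - A - 1 <= sumn (fun i => indic (A <= INR i <= B)) N.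
Proof.
  intros HA. induction N; cbn [sumn]; [simpl; unfold Rmin; destruct Rle_dec; lra|].
  rewrite S_INR. pose proof (pos_INR N) as HN.
  assert (H0 : 0 <= sumn (fun i => indic (A <= INR i <= B)) N)
    by (apply sumn_nonneg; intros; apply indic_bounds).
  destruct (excluded_middle_informative (A <= INR N <= B)) as [HI|HI];
    [rewrite indic_true by auto|rewrite indic_false by auto];
    unfold Rmin in *; repeat destruct Rle_dec; lra.
Qed.

Lemma sumn_double_counting (a b X : nat -> nat -> R) (Ka Kb : R) (nI nI' nQ nU : nat) :
  (forall i u, 0 <= a i u) -> (forall q i', 0 <= b q i') -> (forall q u, 0 <= X q u) ->
  (forall u, sumn (fun i => a i u) nI <= Ka) -> (forall q, sumn (fun i' => b q i') nI' <= Kb) ->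
  sumn (fun i => sumn (fun i' => sumn (fun q => sumn (fun u =>
    a i u * b q i' * X q u) nU) nQ) nI') nI
  <= Ka * Kb * sumn (fun q => sumn (fun u => X q u) nU) nQ.
Proof.
  intros Ha Hb HX HKa HKb.
  assert (HKb0 : 0 <= Kb).
  { pose proof (HKb 0%nat).
    pose proof (sumn_nonneg (fun i' => b 0%nat i') nI' (fun i _ => Hb 0%nat i)). lra. }
  rewrite (sumn_ext _ (fun i => sumn (fun q => sumn (fun i' => sumn (fun u =>
    a i u * b q i' * X q u) nU) nI') nQ) nI) by (intros; apply sumn_swap).
  rewrite sumn_swap.
  apply Rle_trans with (sumn (fun q => sumn (fun i => sumn (fun u =>
    Kb * (a i u * X q u)) nU) nI) nQ).
  { apply sumn_le; intros q _. apply sumn_le; intros i _. rewrite sumn_swap.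
    apply sumn_le; intros u _.
    rewrite (sumn_ext _ (fun i' => (a i u * X q u) * b q i')) by (intros; ring).
    rewrite sumn_scal, (Rmult_comm Kb). apply Rmult_le_compat_l; [|apply HKb].
    apply Rmult_le_pos; auto. }
  apply Rle_trans with (sumn (fun q => Kb * (Ka * sumn (fun u => X q u) nU)) nQ).
  { apply sumn_le; intros q _.
    rewrite (sumn_ext _ (fun i => Kb * sumn (fun u => a i u * X q u) nU))
      by (intros; apply sumn_scal).
    rewrite sumn_scal. apply Rmult_le_compat_l; auto. rewrite sumn_swap.
    rewrite (sumn_ext _ (fun u => X q u * sumn (fun i => a i u) nI))
      by (intros; rewrite <- sumn_scal; apply sumn_ext; intros; ring).
    rewrite <- sumn_scal. apply sumn_le. intros u _. rewrite Rmult_comm.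
    apply Rmult_le_compat_r; auto. }
  rewrite sumn_scal, sumn_scal. right; ring.
Qed.

Lemma pow2_mod3 (d : nat) : exists q c, (2 ^ d = 3 * q + c)%nat /\ (c = 1 \/ c = 2)%nat.
Proof.
  induction d as [|d [q [c [E [-> | ->]]]]].
  - exists 0%nat, 1%nat. simpl. split; auto.
  - exists (2 * q)%nat, 2%nat. simpl. split; [lia|auto].
  - exists (2 * q + 1)%nat, 1%nat. simpl. split; [lia|auto].
Qed.

Lemma floor_exists (x : R) : exists i : Z, IZR i <= x < IZR i + 1.
Proof. destruct (archimed x) as [H1 H2]. exists (up x - 1)%Z. rewrite minus_IZR. simpl. lra. Qed.

Definition grid_origin (al H0 : R) (sg : bool) : R := if sg then al - H0 / 3 else al.

(* The one-third trick: H0 / 3 is congruent to G / 3 or 2 G / 3 modulo the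
   mesh G = H0 / 2 ^ d, because 3 does not divide 2 ^ d. *)
Lemma interval_in_grid_cell (al H0 u1 u2 : R) (d : nat) : 0 < H0 ->
  u1 <= u2 -> u2 - u1 <= H0 / 2 ^ d / 3 ->
  exists (sg : bool) (v : Z),
    grid_origin al H0 sg + IZR v * (H0 / 2 ^ d) <= u1 /\
    u2 <= grid_origin al H0 sg + (IZR v + 1) * (H0 / 2 ^ d).
Proof.
  intros HH Hu Hl. set (G := H0 / 2 ^ d) in *.
  assert (HG : 0 < G) by (apply Rdiv_lt_0_compat; [lra|apply pow2_pos]).
  set (x := (u1 - al) / G).
  assert (Hx : u1 = al + x * G) by (unfold x; field; lra).
  destruct (floor_exists x) as [i Hi].
  destruct (Rle_lt_dec (x - IZR i) (2 / 3)) as [C|C].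
  - exists false, i. simpl. split; nra.
  - destruct (pow2_mod3 d) as [q [c [E Hc]]].
    assert (E' : 2 ^ d = 3 * INR q + INR c)
      by (rewrite <- INR_pow2, E, plus_INR, mult_INR; simpl; ring).
    assert (HH0 : H0 = (3 * INR q + INR c) * G)
      by (unfold G; rewrite <- E'; field; apply pow_nonzero; lra).
    exists true, (i + Z.of_nat q + 1)%Z. unfold grid_origin. rewrite !plus_IZR, <- INR_IZR_INZ.
    destruct Hc as [-> | ->]; simpl INR in HH0; rewrite HH0; split; nra.
Qed.

Lemma count_near_progression (T0 g c e : R) (N : nat) : 0 < g -> g <= e ->
  T0 + e <= c -> c + e <= T0 + INR N * g ->
  e / g <= sumn (fun q => indic (Rabs (T0 + INR q * g - c) <= e)) (S N).
Proof.
  intros Hg Hge H1 H2. set (A := (c - e - T0) / g). set (B := (c + e - T0) / g).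
  assert (HA : 0 <= A) by (apply Rdiv_nonneg; lra).
  assert (HB : B <= INR (S N)).
  { rewrite S_INR. unfold B. apply Rmult_le_reg_r with g; [lra|]. field_simplify; lra. }
  assert (HBA : B - A = 2 * (e / g)) by (unfold A, B; field; lra).
  assert (He : 1 <= e / g) by (apply Rmult_le_reg_r with g; [lra|]; field_simplify; lra).
  pose proof (count_interval_ge A B (S N) HA) as Hc. rewrite Rmin_left in Hc by lra.
  apply Rle_trans with (sumn (fun q => indic (A <= INR q <= B)) (S N)); [lra|].
  apply sumn_le. intros q _. apply indic_le. intros [Q1 Q2]. apply Rabs_le.
  apply Rmult_le_compat_r with (r := g) in Q1, Q2; [|lra|lra].
  unfold A, B, Rdiv in Q1, Q2. rewrite Rmult_assoc, Rinv_l, Rmult_1_r in Q1, Q2 by lra. lra.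
Qed.

Lemma powerRZ_shift (b : R) (n0 : Z) (d : nat) : b <> 0 ->
  powerRZ b (- (n0 + Z.of_nat d)) = powerRZ b (- n0) / b ^ d.
Proof.
  intros Hb. replace (- (n0 + Z.of_nat d))%Z with (- n0 + - Z.of_nat d)%Z by lia.
  rewrite powerRZ_add by auto. rewrite (powerRZ_neg' b (Z.of_nat d)), <- (pow_powerRZ b d).
  reflexivity.
Qed.

Lemma powerRZ_4 (z : Z) : powerRZ 4 z = powerRZ 2 z * powerRZ 2 z.
Proof. replace 4 with (2 * 2) by ring. apply powerRZ_mult. Qed.

Lemma pow_4 (d : nat) : 4 ^ d = 2 ^ d * 2 ^ d.
Proof. rewrite <- Rpow_mult_distr. f_equal. Qed.

Lemma side_pos (Q : dyadic) : 0 < side Q.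
Proof. destruct Q as [[n k] l]. apply powerRZ_lt. lra. Qed.

Definition subcube (n0 k0 l0 : Z) (d i i' : nat) : dyadic :=
  (n0 + Z.of_nat d, k0 * Z.of_nat (2 ^ d) + Z.of_nat i, l0 * Z.of_nat (4 ^ d) + Z.of_nat i')%Z.

Definition depth (n0 : Z) (Q : dyadic) : nat := Z.to_nat (fst (fst Q) - n0).

Lemma depth_subcube (n0 k0 l0 : Z) (d i i' : nat) : depth n0 (subcube n0 k0 l0 d i i') = d.
Proof.
  unfold depth, subcube. simpl. replace (n0 + Z.of_nat d - n0)%Z with (Z.of_nat d) by lia.
  apply Nat2Z.id.
Qed.

Lemma side_subcube (n0 k0 l0 : Z) (d i i' : nat) :
  side (subcube n0 k0 l0 d i i') = side (n0, k0, l0) / 2 ^ d.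
Proof. apply powerRZ_shift. lra. Qed.

Lemma center_subcube (n0 k0 l0 : Z) (d i i' : nat) :
  let h0 := side (n0, k0, l0) in
  center (subcube n0 k0 l0 d i i')
  = ((IZR k0 * 2 ^ d + INR i + / 2) * (h0 / 2 ^ d),
     (IZR l0 * 4 ^ d + INR i' + / 2) * (h0 * h0 / 4 ^ d)).
Proof.
  unfold center, subcube, side. rewrite !plus_IZR, !mult_IZR, <- !INR_IZR_INZ, INR_pow2, INR_pow4.
  rewrite !powerRZ_shift, powerRZ_4 by lra. reflexivity.
Qed.

Lemma center_offset_bounds (i n : nat) (c : R) : (i < n)%nat -> 0 <= c ->
  0 <= (INR i + / 2) * (c / INR n) <= c.
Proof.
  intros Hi Hc. assert (Hn : INR i + 1 <= INR n) by (rewrite <- S_INR; apply le_INR; lia).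
  pose proof (pos_INR i). assert (0 < INR n) by lra.
  replace ((INR i + / 2) * (c / INR n)) with ((INR i + / 2) / INR n * c) by (field; lra).
  assert ((INR i + / 2) / INR n <= 1) by (apply Rmult_le_reg_r with (INR n); field_simplify; lra).
  assert (0 <= (INR i + / 2) / INR n) by (apply Rdiv_nonneg; lra).
  split; nra.
Qed.

Lemma center_subcube_bounds (n0 k0 l0 : Z) (d i i' : nat) :
  (i < 2 ^ d)%nat -> (i' < 4 ^ d)%nat ->
  let h0 := side (n0, k0, l0) in let c := center (subcube n0 k0 l0 d i i') in
  IZR k0 * h0 <= fst c <= (IZR k0 + 1) * h0 /\
  IZR l0 * (h0 * h0) <= snd c <= (IZR l0 + 1) * (h0 * h0).
Proof.
  intros Hi Hi' h0 c. unfold c. rewrite center_subcube. fold h0. simpl.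
  pose proof (side_pos (n0, k0, l0)). fold h0 in H. pose proof (pow2_pos d).
  assert (0 < 4 ^ d) by (apply pow_lt; lra).
  pose proof (center_offset_bounds i (2 ^ d) h0 Hi ltac:(lra)) as B1.
  pose proof (center_offset_bounds i' (4 ^ d) (h0 * h0) Hi' ltac:(nra)) as B2.
  rewrite INR_pow2 in B1. rewrite INR_pow4 in B2.
  replace ((IZR k0 * 2 ^ d + INR i + / 2) * (h0 / 2 ^ d))
    with (IZR k0 * h0 + (INR i + / 2) * (h0 / 2 ^ d)) by (field; lra).
  replace ((IZR l0 * 4 ^ d + INR i' + / 2) * (h0 * h0 / 4 ^ d))
    with (IZR l0 * (h0 * h0) + (INR i' + / 2) * (h0 * h0 / 4 ^ d)) by (field; lra).
  lra.
Qed.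

Lemma interval_incl_bounds (a b a0 b0 : R) : a < b ->
  (forall y, a <= y < b -> a0 <= y < b0) -> a0 <= a /\ b <= b0.
Proof.
  intros Hab H. split; [apply (H a); lra|].
  destruct (Rle_lt_dec b b0) as [|Hb]; auto.
  pose proof (H (Rmax a b0)) as Hm. unfold Rmax in Hm. destruct Rle_dec; lra.
Qed.

Lemma dyadic_subset_bounds (n k l n0 k0 l0 : Z) :
  dyadic_subset (n, k, l) (n0, k0, l0) ->
  let h := powerRZ 2 (- n) in let h0 := powerRZ 2 (- n0) in
  let q := powerRZ 4 (- n) in let q0 := powerRZ 4 (- n0) in
  IZR k0 * h0 <= IZR k * h /\ (IZR k + 1) * h <= (IZR k0 + 1) * h0 /\
  IZR l0 * q0 <= IZR l * q /\ (IZR l + 1) * q <= (IZR l0 + 1) * q0.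
Proof.
  intros Hs h h0 q q0.
  assert (Hh : 0 < h) by (apply powerRZ_lt; lra). assert (Hq : 0 < q) by (apply powerRZ_lt; lra).
  destruct (interval_incl_bounds (IZR k * h) ((IZR k + 1) * h) (IZR k0 * h0) ((IZR k0 + 1) * h0))
    as [K1 K2]; [nra| |].
  { intros y Hy. refine (proj1 (Hs (y, IZR l * q) _)). simpl. fold h q. split; [exact Hy|nra]. }
  destruct (interval_incl_bounds (IZR l * q) ((IZR l + 1) * q) (IZR l0 * q0) ((IZR l0 + 1) * q0))
    as [L1 L2]; [nra| |].
  { intros t Ht. refine (proj2 (Hs (IZR k * h, t) _)). simpl. fold h q. split; [nra|exact Ht]. }
  auto.
Qed.

Lemma powerRZ2_lt_double (n n0 : Z) : (n < n0)%Z -> 2 * powerRZ 2 (- n0) <= powerRZ 2 (- n).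
Proof.
  intros H. replace n0 with (n + Z.of_nat (S (Z.to_nat (n0 - n - 1))))%Z by lia.
  rewrite powerRZ_shift by lra. pose proof (powerRZ_lt 2 (- n) ltac:(lra)).
  simpl pow. assert (1 <= 2 ^ Z.to_nat (n0 - n - 1)) by (apply pow_R1_Rle; lra).
  apply Rmult_le_reg_r with (2 * 2 ^ Z.to_nat (n0 - n - 1)); [lra|]. field_simplify; nra.
Qed.

Lemma dyadic_subset_subcube (n k l n0 k0 l0 : Z) :
  dyadic_subset (n, k, l) (n0, k0, l0) ->
  exists d i i', (n, k, l) = subcube n0 k0 l0 d i i' /\ (i < 2 ^ d)%nat /\ (i' < 4 ^ d)%nat.
Proof.
  intros Hs. destruct (dyadic_subset_bounds _ _ _ _ _ _ Hs) as [K1 [K2 [L1 L2]]].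
  set (h0 := powerRZ 2 (- n0)) in *. set (q0 := powerRZ 4 (- n0)) in *.
  assert (Hh0 : 0 < h0) by (apply powerRZ_lt; lra).
  assert (Hq0 : 0 < q0) by (apply powerRZ_lt; lra).
  assert (Hn : (n0 <= n)%Z).
  { destruct (Z_lt_le_dec n n0) as [C|C]; auto.
    pose proof (powerRZ2_lt_double n n0 C). fold h0 in H. nra. }
  set (d := Z.to_nat (n - n0)).
  assert (En : n = (n0 + Z.of_nat d)%Z) by (unfold d; lia).
  rewrite En, !powerRZ_shift in K1, K2, L1, L2 by lra. fold h0 q0 in K1, K2, L1, L2.
  pose proof (pow2_pos d). assert (0 < 4 ^ d) by (apply pow_lt; lra).
  assert (K1' : IZR (k0 * Z.of_nat (2 ^ d)) <= IZR k).
  { rewrite mult_IZR, <- INR_IZR_INZ, INR_pow2.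
    apply Rmult_le_reg_r with (h0 / 2 ^ d); [apply Rdiv_lt_0_compat; lra|].
    replace (IZR k0 * 2 ^ d * (h0 / 2 ^ d)) with (IZR k0 * h0) by (field; lra). lra. }
  assert (K2' : IZR (k + 1) <= IZR (k0 * Z.of_nat (2 ^ d) + Z.of_nat (2 ^ d))).
  { rewrite !plus_IZR, mult_IZR, <- !INR_IZR_INZ, INR_pow2.
    apply Rmult_le_reg_r with (h0 / 2 ^ d); [apply Rdiv_lt_0_compat; lra|].
    replace ((IZR k0 * 2 ^ d + 2 ^ d) * (h0 / 2 ^ d)) with ((IZR k0 + 1) * h0) by (field; lra).
    lra. }
  assert (L1' : IZR (l0 * Z.of_nat (4 ^ d)) <= IZR l).
  { rewrite mult_IZR, <- INR_IZR_INZ, INR_pow4.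
    apply Rmult_le_reg_r with (q0 / 4 ^ d); [apply Rdiv_lt_0_compat; lra|].
    replace (IZR l0 * 4 ^ d * (q0 / 4 ^ d)) with (IZR l0 * q0) by (field; lra). lra. }
  assert (L2' : IZR (l + 1) <= IZR (l0 * Z.of_nat (4 ^ d) + Z.of_nat (4 ^ d))).
  { rewrite !plus_IZR, mult_IZR, <- !INR_IZR_INZ, INR_pow4.
    apply Rmult_le_reg_r with (q0 / 4 ^ d); [apply Rdiv_lt_0_compat; lra|].
    replace ((IZR l0 * 4 ^ d + 4 ^ d) * (q0 / 4 ^ d)) with ((IZR l0 + 1) * q0) by (field; lra).
    lra. }
  apply le_IZR in K1', K2', L1', L2'.
  exists d, (Z.to_nat (k - k0 * Z.of_nat (2 ^ d))), (Z.to_nat (l - l0 * Z.of_nat (4 ^ d))).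
  unfold subcube. rewrite !Z2Nat.id by lia. split; [f_equal; [f_equal|]; lia|lia].
Qed.

Definition lsum (F : dyadic -> R) (s : list dyadic) : R :=
  fold_right (fun Q acc => F Q + acc) 0 s.

Lemma lsum_le (F G : dyadic -> R) (s : list dyadic) :
  (forall Q, In Q s -> F Q <= G Q) -> lsum F s <= lsum G s.
Proof.
  induction s as [|Q s IH]; simpl; intros H; [lra|].
  pose proof (H Q (or_introl eq_refl)). assert (lsum F s <= lsum G s) by (apply IH; auto). lra.
Qed.

Lemma lsum_nonneg (F : dyadic -> R) (s : list dyadic) : (forall Q, 0 <= F Q) -> 0 <= lsum F s.
Proof. intros H; induction s as [|Q s IH]; simpl; [lra|]. pose proof (H Q). lra. Qed.

Definition dyadic_eq_dec (x y : dyadic) : {x = y} + {x <> y}.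
Proof. repeat decide equality. Defined.

Lemma lsum_remove (F : dyadic -> R) (x : dyadic) (B : list dyadic) : (forall Q, 0 <= F Q) ->
  In x B -> F x + lsum F (remove dyadic_eq_dec x B) <= lsum F B.
Proof.
  intros H. induction B as [|a B IH]; simpl; intros Hin; [tauto|].
  destruct (dyadic_eq_dec x a) as [<-|E]; simpl.
  - assert (lsum F (remove dyadic_eq_dec x B) <= lsum F B); [|lra].
    clear IH Hin. induction B as [|b B IHB]; simpl; [lra|].
    destruct (dyadic_eq_dec x b); simpl; pose proof (H b); lra.
  - destruct Hin as [Hin|Hin]; [congruence|]. pose proof (IH Hin). lra.
Qed.

Lemma lsum_incl_le (F : dyadic -> R) (s B : list dyadic) : (forall Q, 0 <= F Q) ->
  NoDup s -> incl s B -> lsum F s <= lsum F B.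
Proof.
  intros HF. revert B. induction s as [|a s IH]; intros B Hnd Hin; simpl; [now apply lsum_nonneg|].
  inversion Hnd; subst.
  pose proof (lsum_remove F a B HF (Hin a (or_introl eq_refl))).
  assert (lsum F s <= lsum F (remove dyadic_eq_dec a B)); [|lra].
  apply IH; auto. intros Q HQ. apply in_in_remove; [intros ->; tauto|]. apply Hin; right; auto.
Qed.

Lemma lsum_app (F : dyadic -> R) (l1 l2 : list dyadic) :
  lsum F (l1 ++ l2) = lsum F l1 + lsum F l2.
Proof. induction l1; simpl; [lra|]. rewrite IHl1; lra. Qed.

Lemma lsum_flat_map (F : dyadic -> R) (G : nat -> list dyadic) (n : nat) :
  lsum F (flat_map G (seq 0 n)) = sumn (fun d => lsum F (G d)) n.
Proof.
  induction n; [reflexivity|].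
  rewrite seq_S, flat_map_app, lsum_app, IHn. simpl. rewrite app_nil_r. reflexivity.
Qed.

Lemma lsum_map (F : dyadic -> R) (g : nat -> dyadic) (n : nat) :
  lsum F (map g (seq 0 n)) = sumn (fun i => F (g i)) n.
Proof. induction n; [reflexivity|]. rewrite seq_S, map_app, lsum_app, IHn. simpl. lra. Qed.

Definition subcubes (n0 k0 l0 : Z) (Dm : nat) : list dyadic :=
  flat_map (fun d => flat_map (fun i => map (fun i' => subcube n0 k0 l0 d i i')
    (seq 0 (4 ^ d))) (seq 0 (2 ^ d))) (seq 0 Dm).

Lemma lsum_subcubes (F : dyadic -> R) (n0 k0 l0 : Z) (Dm : nat) :
  lsum F (subcubes n0 k0 l0 Dm)
  = sumn (fun d => sumn (fun i => sumn (fun i' => F (subcube n0 k0 l0 d i i')) (4 ^ d)) (2 ^ d)) Dm.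
Proof.
  unfold subcubes. rewrite lsum_flat_map. apply sumn_ext. intros d _. rewrite lsum_flat_map.
  apply sumn_ext. intros i _. apply lsum_map.
Qed.

Lemma in_subcubes (n0 k0 l0 : Z) (Dm d i i' : nat) :
  (d < Dm)%nat -> (i < 2 ^ d)%nat -> (i' < 4 ^ d)%nat ->
  In (subcube n0 k0 l0 d i i') (subcubes n0 k0 l0 Dm).
Proof.
  intros. unfold subcubes. apply in_flat_map. exists d. split; [apply in_seq; lia|].
  apply in_flat_map. exists i. split; [apply in_seq; lia|]. apply in_map. apply in_seq; lia.
Qed.

Lemma dpar_horizontal (u v t : R) : dpar (u, t) (v, t) = Rabs (u - v).
Proof.
  unfold dpar. rewrite Rminus_diag, Rabs_R0, sqrt_0. apply Rmax_left, Rabs_pos.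
Qed.

Lemma dpar_vertical (y t t' : R) : dpar (y, t) (y, t') = sqrt (Rabs (t - t')).
Proof. unfold dpar. rewrite Rminus_diag, Rabs_R0. apply Rmax_right, sqrt_pos. Qed.

Lemma bilip_curve_horizontal (M t : R) (f : Wpt -> Hpt) :
  bilipschitz M f -> bilip_curve M (fun y => f (y, t)).
Proof. intros Hf u v. rewrite <- (dpar_horizontal u v t). apply Hf. Qed.

Definition not_flat_on (f : Wpt -> Hpt) (t a b lam : R) : Prop :=
  forall L, H_horizontal_line L -> exists y, a <= y <= b /\ ~ in_Nbhd L lam (f (y, t)).

(* rho = eps / 2 is not admissible, so some horizontal line of the ball is badly
   approximated by every horizontal line of H. *)
Lemma not_flat_of_ruler_ge (f : Wpt -> Hpt) (w : Wpt) (r eps : R) : 0 <= r -> 0 < eps ->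
  ruler_ge f w r eps ->
  exists t0, Rabs (snd w - t0) <= r * r /\ not_flat_on f t0 (fst w - r) (fst w + r) (eps / 2 * r).
Proof.
  intros Hr Heps Hge.
  assert (Hna : ~ ruler_admissible f w r (eps / 2))
    by (intros Ha; pose proof (Hge (eps / 2) ltac:(lra) Ha); lra).
  apply not_all_ex_not in Hna as [t0 Ht0].
  assert (HL : forall L, H_horizontal_line L ->
            exists y, Wball w r (y, t0) /\ ~ in_Nbhd L (eps / 2 * r) (f (y, t0))).
  { intros L HL. apply NNPP. intros Hn. apply Ht0. exists L. split; auto. intros y Hy.
    apply NNPP. intros Hn2. apply Hn. exists y. split; auto. }
  destruct w as [cy ct]. exists t0. split.
  - destruct (HL (fun q => exists s, q = Hmul (0, 0, 0) (s * 1, s * 0, 0))) as [y [Hw _]].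
    { exists (0, 0, 0), 1, 0. split; [lra|tauto]. }
    apply le_sq_of_sqrt_le; auto. eapply Rle_trans; [apply Rmax_r|apply Hw].
  - intros L HL'. destruct (HL L HL') as [y [Hy Hy2]]. exists y. split; auto.
    pose proof (Rmax_l (Rabs (cy - y)) (sqrt (Rabs (ct - t0)))) as Hm.
    unfold Wball, dpar in Hy. apply Rabs_le_bounds in Hm. simpl. split; lra.
Qed.

Lemma not_flat_on_perturb (M : R) (f : Wpt -> Hpt) (t0 t a b lam s : R) : bilipschitz M f ->
  0 <= M -> 0 <= s -> Rabs (t - t0) <= s * s -> M * s <= lam ->
  not_flat_on f t0 a b (2 * lam) -> not_flat_on f t a b lam.
Proof.
  intros Hf HM Hs Ht Hl Hn L HL. destruct (Hn L HL) as [y [Hy Hy2]]. exists y. split; auto.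
  intros Hin. apply Hy2. replace (2 * lam) with (lam + lam) by ring.
  apply in_Nbhd_triangle with (f (y, t)); auto.
  destruct (Hf (y, t0) (y, t)) as [_ B]. rewrite dpar_vertical in B.
  assert (Hsq : sqrt (Rabs (t0 - t)) <= s)
    by (apply sqrt_le_of_le_sq; [lra|]; rewrite Rabs_minus_sym; lra).
  pose proof (Rmult_le_compat_l M _ _ HM Hsq). lra.
Qed.

Section Packing.

Variables (M eps C : R) (p m : nat).

(* Flatness at level rho_flat of a window of length 2 ^ p l(Q) means flatness
   at level eps C l(Q) / 4. *)
Definition rho_flat : R := eps / 2 * C / (2 * 2 ^ p).

Hypotheses (HM : 1 <= M) (Heps : 0 < eps <= 1) (HC : 1 <= C) (Hp : 6 * C <= 2 ^ p)
  (Hm : 16 * (M * M) <= INR (2 ^ m) * (rho_flat * rho_flat)).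

Variable f : Wpt -> Hpt.
Hypothesis Hf : bilipschitz M f.
Variables n0 k0 l0 : Z.

Definition h0 : R := side (n0, k0, l0).
Definition H0 : R := 2 ^ p * h0.
(* Changing the height by (eta r)^2 moves f by at most M eta r = eps r / 4. *)
Definition eta : R := eps / 2 / (2 * M).

(* Two grids of windows of length H0 / 2 ^ d, the second shifted by H0 / 3; both
   start 2 H0 to the left of Q0. *)
Definition origin (sg : bool) : R := grid_origin (IZR k0 * h0 - 2 * H0) H0 sg.

Definition excess_at (t : R) (sg : bool) (d u : nat) : R :=
  window_excess (fun y => f (y, t)) (origin sg) H0 m d u.

Definition covers (sg : bool) (u : nat) (Q : dyadic) : Prop :=
  grid_pt (origin sg) H0 (depth n0 Q) u <= fst (center Q) - C * side Q /\
  fst (center Q) + C * side Q <= grid_pt (origin sg) H0 (depth n0 Q) (S u).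

Definition near_height (t : R) (Q : dyadic) : Prop :=
  Rabs (t - snd (center Q)) <= 2 * ((C * side Q) * (C * side Q)).

Definition bad_height (t : R) (Q : dyadic) : Prop :=
  near_height t Q /\ not_flat_on f t (fst (center Q) - C * side Q) (fst (center Q) + C * side Q)
                                   (eps / 2 * (C * side Q) / 2).

Definition covering_excess (t : R) (sg : bool) (Q : dyadic) : R :=
  sumn (fun u => indic (covers sg u Q) * indic (near_height t Q) * excess_at t sg (depth n0 Q) u)
       (6 * 2 ^ depth n0 Q).

(* Heights are sampled at Ng + 1 equally spaced points of an interval containing
   every height within 2 (C l(Q))^2 of a subcube of Q0. *)
Definition height_range : R := (1 + 4 * (C * C)) * (h0 * h0).
Definition height_step (Ng : nat) : R := height_range / INR Ng.
Definition height (Ng q : nat) : R :=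
  IZR l0 * (h0 * h0) - 2 * (C * C) * (h0 * h0) + INR q * height_step Ng.

Lemma h0_pos : 0 < h0.
Proof. apply side_pos. Qed.

Lemma H0_pos : 0 < H0.
Proof. unfold H0. pose proof h0_pos. pose proof (pow2_pos p). nra. Qed.

Lemma eta_pos : 0 < eta.
Proof. unfold eta. apply Rdiv_lt_0_compat; lra. Qed.

Lemma eta_le_1 : eta <= 1.
Proof. unfold eta. apply Rmult_le_reg_r with (2 * M); [lra|]. field_simplify; lra. Qed.

Lemma side_subcube_le (d i i' : nat) : side (subcube n0 k0 l0 d i i') <= h0.
Proof.
  rewrite side_subcube. fold h0. pose proof h0_pos. pose proof (pow_R1_Rle 2 d ltac:(lra)).
  apply Rmult_le_reg_r with (2 ^ d); [lra|]. field_simplify; nra.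
Qed.

Lemma height_step_pos (Ng : nat) : (1 <= Ng)%nat -> 0 < height_step Ng.
Proof.
  intros HNg. pose proof h0_pos. unfold height_step, height_range.
  apply Rdiv_lt_0_compat; [nra|apply lt_0_INR; lia].
Qed.

Lemma excess_at_nonneg (t : R) (sg : bool) (d u : nat) : 0 <= excess_at t sg d u.
Proof. apply window_excess_nonneg. Qed.

Lemma covering_excess_nonneg (t : R) (sg : bool) (Q : dyadic) : 0 <= covering_excess t sg Q.
Proof.
  apply sumn_nonneg. intros u _. pose proof (indic_bounds (covers sg u Q)).
  pose proof (indic_bounds (near_height t Q)). pose proof (excess_at_nonneg t sg (depth n0 Q) u).
  apply Rmult_le_pos; [apply Rmult_le_pos|]; lra.
Qed.

Definition bad_count (Ng : nat) (Q : dyadic) : R :=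
  sumn (fun q => indic (bad_height (height Ng q) Q)) (S Ng).

Lemma bad_count_nonneg (Ng : nat) (Q : dyadic) : 0 <= bad_count Ng Q.
Proof. apply sumn_nonneg. intros; apply indic_bounds. Qed.

Lemma bad_height_of_near (Q : dyadic) (t0 t : R) : let r := C * side Q in
  Rabs (snd (center Q) - t0) <= r * r ->
  not_flat_on f t0 (fst (center Q) - r) (fst (center Q) + r) (eps / 2 * r) ->
  Rabs (t - t0) <= eta * eta * (r * r) -> bad_height t Q.
Proof.
  intros r Ht0 HN Ht. pose proof eta_pos. pose proof eta_le_1.
  assert (Hr : 0 < r) by (unfold r; pose proof (side_pos Q); nra).
  assert (eta * eta <= 1) by nra. assert (eta * eta * (r * r) <= r * r) by nra. split.
  - unfold near_height. fold r. apply Rabs_le_bounds in Ht, Ht0. apply Rabs_le; split; lra.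
  - fold r. apply (not_flat_on_perturb M f t0 _ _ _ _ (eta * r) Hf); [lra|nra| | |].
    + replace (eta * r * (eta * r)) with (eta * eta * (r * r)) by ring. exact Ht.
    + unfold eta. right. field. lra.
    + replace (2 * (eps / 2 * r / 2)) with (eps / 2 * r) by field. exact HN.
Qed.

(* A bad cube has a whole interval of bad heights, of length comparable to l(Q)^2. *)
Lemma bad_count_ge (d i i' Ng : nat) : (i < 2 ^ d)%nat -> (i' < 4 ^ d)%nat ->
  (1 <= Ng)%nat -> in_bad f C eps (subcube n0 k0 l0 d i i') ->
  let Q := subcube n0 k0 l0 d i i' in let e := eta * eta * ((C * side Q) * (C * side Q)) in
  height_step Ng <= e -> e / height_step Ng <= bad_count Ng Q.
Proof.
  intros Hi Hi' HNg Hbad Q e Hg.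
  pose proof h0_pos. pose proof eta_pos. pose proof eta_le_1.
  set (r := C * side Q) in *. set (g := height_step Ng) in *.
  assert (Hh : 0 < side Q <= h0) by (split; [apply side_pos|apply side_subcube_le]).
  destruct (not_flat_of_ruler_ge f (center Q) r eps ltac:(unfold r; nra) ltac:(lra) Hbad)
    as [t0 [Ht0 HN]].
  destruct (center_subcube_bounds n0 k0 l0 d i i' Hi Hi') as [_ Hct].
  fold h0 in Hct. change (subcube n0 k0 l0 d i i') with Q in Hct.
  assert (Hrr : r * r <= C * C * (h0 * h0)).
  { unfold r. assert (side Q * side Q <= h0 * h0) by nra. nra. }
  assert (He : e <= r * r).
  { assert (eta * eta <= 1) by nra. assert (0 <= r * r) by nra. unfold e. fold r. nra. }
  assert (Hg0 : 0 < g) by (apply height_step_pos; auto).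
  apply Rle_trans with (sumn (fun q => indic (Rabs (height Ng q - t0) <= e)) (S Ng)).
  - apply Rabs_le_bounds in Ht0. apply count_near_progression; auto; [nra|].
    unfold g, height_step. replace (INR Ng * (height_range / INR Ng)) with height_range
      by (field; apply not_0_INR; lia).
    unfold height_range. nra.
  - apply sumn_le. intros q _. apply indic_le. apply bad_height_of_near; auto.
Qed.

Lemma side_cube_le_bad_count (d i i' Ng : nat) : (i < 2 ^ d)%nat -> (i' < 4 ^ d)%nat ->
  (1 <= Ng)%nat -> in_bad f C eps (subcube n0 k0 l0 d i i') ->
  let Q := subcube n0 k0 l0 d i i' in
  height_step Ng <= eta * eta * ((C * side Q) * (C * side Q)) ->
  side Q ^ 3 <= height_step Ng / (eta * eta * (C * C)) * (side Q * bad_count Ng Q).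
Proof.
  intros Hi Hi' HNg Hbad Q Hg.
  pose proof (bad_count_ge d i i' Ng Hi Hi' HNg Hbad Hg) as Hcount. fold Q in Hcount.
  pose proof eta_pos. pose proof (side_pos Q). set (g := height_step Ng) in *.
  assert (HE : 0 < eta * eta * (C * C)) by (apply Rmult_lt_0_compat; nra).
  assert (Hg0 : 0 < g) by (apply height_step_pos; auto).
  replace (side Q ^ 3)
    with (side Q * (g / (eta * eta * (C * C)) * (eta * eta * (C * side Q * (C * side Q)) / g)))
    by (field; nra).
  rewrite <- Rmult_assoc, (Rmult_comm (side Q)), Rmult_assoc.
  apply Rmult_le_compat_l; [apply Rdiv_nonneg; lra|]. apply Rmult_le_compat_l; lra.
Qed.

Lemma rho_flat_bounds : 0 < rho_flat <= 1.
Proof.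
  pose proof (pow2_pos p). unfold rho_flat. split.
  - apply Rdiv_lt_0_compat; nra.
  - apply Rmult_le_reg_r with (2 * 2 ^ p); [lra|]. field_simplify; nra.
Qed.

Lemma flat_threshold_pos : 0 < flat_threshold M rho_flat.
Proof.
  pose proof rho_flat_bounds. unfold flat_threshold, flat_kappa.
  apply Rdiv_lt_0_compat; [|lra]. assert (0 < rho_flat * rho_flat / (16 * M)); [|nra].
  apply Rdiv_lt_0_compat; nra.
Qed.

Lemma covering_window_exists (d i i' : nat) : (i < 2 ^ d)%nat -> (i' < 4 ^ d)%nat ->
  exists sg u, (u < 6 * 2 ^ d)%nat /\ covers sg u (subcube n0 k0 l0 d i i').
Proof.
  intros Hi Hi'. set (Q := subcube n0 k0 l0 d i i').
  destruct (center_subcube_bounds n0 k0 l0 d i i' Hi Hi') as [Hcy _].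
  fold h0 in Hcy. change (subcube n0 k0 l0 d i i') with Q in Hcy.
  set (cy := fst (center Q)) in *. set (r := C * side Q). set (G := H0 / 2 ^ d).
  pose proof h0_pos. pose proof H0_pos. pose proof (pow2_pos d). pose proof (pow2_pos p).
  assert (HG : G = 2 ^ p * side Q) by (unfold G, Q, H0, h0; rewrite side_subcube; field; lra).
  assert (HGpos : 0 < G) by (apply Rdiv_lt_0_compat; lra).
  assert (Hr : 0 < r) by (unfold r; pose proof (side_pos Q); nra).
  assert (HGH : 2 ^ d * G = H0) by (unfold G; field; lra).
  assert (Hh06 : 6 * h0 <= H0) by (unfold H0; nra).
  destruct (interval_in_grid_cell (IZR k0 * h0 - 2 * H0) H0 (cy - r) (cy + r) d H0_pos)
    as [sg [v [V1 V2]]]; [lra|fold G; rewrite HG; unfold r; pose proof (side_pos Q); nra|].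
  fold G in V1, V2. fold (origin sg) in V1, V2.
  assert (Hor : IZR k0 * h0 - 2 * H0 - H0 / 3 <= origin sg <= IZR k0 * h0 - 2 * H0)
    by (unfold origin, grid_origin; destruct sg; lra).
  assert (Hv0 : 0 <= IZR v).
  { assert (2 * G <= (IZR v + 1) * G); [|nra].
    assert (1 <= 2 ^ d) by (apply pow_R1_Rle; lra). nra. }
  apply le_IZR in Hv0 as Hv0'.
  exists sg, (Z.to_nat v).
  assert (Hu : INR (Z.to_nat v) = IZR v) by (rewrite INR_IZR_INZ, Z2Nat.id; auto; lia).
  split.
  - apply INR_lt. rewrite mult_INR, INR_pow2, Hu. simpl INR.
    assert (IZR v * G <= 3 * H0) by nra. nra.
  - unfold covers. fold cy. unfold Q. rewrite depth_subcube. fold Q. fold r.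
    unfold grid_pt. rewrite S_INR, Hu. fold G. split; lra.
Qed.

Lemma excess_ge_of_not_flat (t a b : R) (sg : bool) (d u : nat) :
  grid_pt (origin sg) H0 d u <= a -> b <= grid_pt (origin sg) H0 d (S u) ->
  not_flat_on f t a b (rho_flat * (H0 / 2 ^ d)) ->
  flat_threshold M rho_flat * (H0 / 2 ^ d) <= excess_at t sg d u.
Proof.
  intros Ha Hb HN. destruct (Rle_lt_dec (flat_threshold M rho_flat * (H0 / 2 ^ d))
    (excess_at t sg d u)) as [|Hlt]; auto. exfalso.
  pose proof H0_pos. pose proof (pow2_pos d).
  destruct (flat_of_small_excess M rho_flat (grid_pt (origin sg) H0 d u) (H0 / 2 ^ d) (2 ^ m)
    (fun y => f (y, t)) HM rho_flat_bounds Hm (bilip_curve_horizontal M t f Hf)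
    ltac:(apply Rdiv_lt_0_compat; lra) Hlt) as [L [HL Hnear]].
  destruct (HN L HL) as [y [Hy Hfar]]. apply Hfar, Hnear.
  unfold grid_pt in *. rewrite S_INR in Hb. lra.
Qed.

Lemma side_le_covering_excess (d i i' : nat) (t : R) : (i < 2 ^ d)%nat -> (i' < 4 ^ d)%nat ->
  let Q := subcube n0 k0 l0 d i i' in
  side Q * indic (bad_height t Q) <=
  / (flat_threshold M rho_flat * 2 ^ p) * (covering_excess t false Q + covering_excess t true Q).
Proof.
  intros Hi Hi' Q.
  pose proof (covering_excess_nonneg t false Q). pose proof (covering_excess_nonneg t true Q).
  pose proof flat_threshold_pos. pose proof (pow2_pos p). pose proof (pow2_pos d).
  assert (Hinv : 0 < / (flat_threshold M rho_flat * 2 ^ p))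
    by (apply Rinv_0_lt_compat; nra).
  destruct (classic (bad_height t Q)) as [[Hnear HN]|Hb];
    [|rewrite indic_false, Rmult_0_r by auto; nra].
  rewrite indic_true, Rmult_1_r by (split; auto).
  destruct (covering_window_exists d i i' Hi Hi') as [sg [u [Hu Hcov]]].
  assert (HG : H0 / 2 ^ d = 2 ^ p * side Q) by (unfold Q, H0, h0; rewrite side_subcube; field; lra).
  assert (HX : flat_threshold M rho_flat * (H0 / 2 ^ d) <= excess_at t sg d u).
  { destruct Hcov as [C1 C2]. rewrite depth_subcube in C1, C2.
    apply (excess_ge_of_not_flat t _ _ sg d u C1 C2).
    replace (rho_flat * (H0 / 2 ^ d)) with (eps / 2 * (C * side Q) / 2)
      by (rewrite HG; unfold rho_flat; field; lra).
    exact HN. }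
  assert (Hterm : excess_at t sg d u <= covering_excess t sg Q).
  { assert (Hdepth : depth n0 Q = d) by apply depth_subcube.
    unfold covering_excess. rewrite Hdepth.
    replace (excess_at t sg d u)
      with (indic (covers sg u Q) * indic (near_height t Q) * excess_at t sg d u)
      by (rewrite !indic_true by auto; ring).
    apply (sumn_term_le (fun u => indic (covers sg u Q) * indic (near_height t Q)
                                  * excess_at t sg d u)); [|exact Hu].
    intros v _. pose proof (indic_bounds (covers sg v Q)).
    pose proof (indic_bounds (near_height t Q)). pose proof (excess_at_nonneg t sg d v).
    apply Rmult_le_pos; [apply Rmult_le_pos|]; lra. }
  rewrite HG in HX.
  apply Rmult_le_reg_l with (flat_threshold M rho_flat * 2 ^ p); [nra|].
  rewrite <- Rmult_assoc, Rinv_r, Rmult_1_l by nra.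
  destruct sg; nra.
Qed.

Definition side_at (d : nat) : R := h0 / 2 ^ d.
Definition cy_at (d i : nat) : R := (IZR k0 * 2 ^ d + INR i + / 2) * (h0 / 2 ^ d).
Definition ct_at (d i' : nat) : R := (IZR l0 * 4 ^ d + INR i' + / 2) * (h0 * h0 / 4 ^ d).

Definition covers_at (sg : bool) (d u i : nat) : Prop :=
  grid_pt (origin sg) H0 d u <= cy_at d i - C * side_at d /\
  cy_at d i + C * side_at d <= grid_pt (origin sg) H0 d (S u).

Definition near_at (t : R) (d i' : nat) : Prop :=
  Rabs (t - ct_at d i') <= 2 * ((C * side_at d) * (C * side_at d)).

Lemma covers_subcube (sg : bool) (u d i i' : nat) :
  covers sg u (subcube n0 k0 l0 d i i') = covers_at sg d u i.
Proof. unfold covers. rewrite depth_subcube, center_subcube, side_subcube. reflexivity. Qed.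

Lemma near_height_subcube (t : R) (d i i' : nat) :
  near_height t (subcube n0 k0 l0 d i i') = near_at t d i'.
Proof. unfold near_height. rewrite center_subcube, side_subcube. reflexivity. Qed.

Lemma side_at_pos (d : nat) : 0 < side_at d.
Proof. apply Rdiv_lt_0_compat; [apply h0_pos|apply pow2_pos]. Qed.

Lemma count_covers_at (sg : bool) (d u : nat) :
  sumn (fun i => indic (covers_at sg d u i)) (2 ^ d) <= 2 ^ p + 1.
Proof.
  pose proof (side_at_pos d) as Hh. pose proof (pow2_pos p).
  set (A := grid_pt (origin sg) H0 d u / side_at d - IZR k0 * 2 ^ d - / 2).
  apply Rle_trans with (sumn (fun i => indic (A <= INR i <= A + 2 ^ p)) (2 ^ d)).
  - apply sumn_le. intros i _. apply indic_le. intros [C1 C2].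
    assert (Hc : cy_at d i = (IZR k0 * 2 ^ d + INR i + / 2) * side_at d) by reflexivity.
    assert (Hg : grid_pt (origin sg) H0 d (S u) = grid_pt (origin sg) H0 d u + 2 ^ p * side_at d).
    { unfold grid_pt, side_at, H0. rewrite S_INR. field. apply pow_nonzero; lra. }
    assert (E : grid_pt (origin sg) H0 d u = A * side_at d + (IZR k0 * 2 ^ d + / 2) * side_at d)
      by (unfold A; field; lra).
    assert (0 <= C * side_at d) by nra.
    split; apply Rmult_le_reg_r with (side_at d); auto; nra.
  - eapply Rle_trans; [apply count_interval_le|]. unfold Rmax; destruct Rle_dec; lra.
Qed.

Lemma count_near_at (t : R) (d : nat) :
  sumn (fun i' => indic (near_at t d i')) (4 ^ d) <= 4 * (C * C) + 1.
Proof.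
  pose proof (side_at_pos d) as Hh.
  set (q := side_at d * side_at d). assert (Hq : 0 < q) by (unfold q; nra).
  assert (Ect : forall i', ct_at d i' = (IZR l0 * 4 ^ d + INR i' + / 2) * q).
  { intros. unfold ct_at, q, side_at. rewrite pow_4. field. apply pow_nonzero; lra. }
  set (A := t / q - IZR l0 * 4 ^ d - / 2 - 2 * (C * C)).
  apply Rle_trans with (sumn (fun i' => indic (A <= INR i' <= A + 4 * (C * C))) (4 ^ d)).
  - apply sumn_le. intros i _. apply indic_le. intros Habs. unfold near_at in Habs.
    rewrite Ect in Habs. apply Rabs_le_bounds in Habs.
    replace ((C * side_at d) * (C * side_at d)) with (C * C * q) in Habs by (unfold q; ring).
    assert (Et : t = (t / q) * q) by (field; lra).
    split; apply Rmult_le_reg_r with q; auto; unfold A; nra.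
  - eapply Rle_trans; [apply count_interval_le|]. unfold Rmax; destruct Rle_dec; nra.
Qed.

Lemma layer_le_excess (Ng d : nat) :
  sumn (fun i => sumn (fun i' =>
    side (subcube n0 k0 l0 d i i') * bad_count Ng (subcube n0 k0 l0 d i i')) (4 ^ d)) (2 ^ d)
  <= / (flat_threshold M rho_flat * 2 ^ p) * ((2 ^ p + 1) * (4 * (C * C) + 1)) *
     (sumn (fun q => sumn (fun u => excess_at (height Ng q) false d u) (6 * 2 ^ d)) (S Ng) +
      sumn (fun q => sumn (fun u => excess_at (height Ng q) true d u) (6 * 2 ^ d)) (S Ng)).
Proof.
  set (K := / (flat_threshold M rho_flat * 2 ^ p)).
  assert (HK : 0 <= K).
  { pose proof flat_threshold_pos. pose proof (pow2_pos p).
    left. apply Rinv_0_lt_compat. nra. }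
  set (cov := fun sg i i' => sumn (fun q =>
                covering_excess (height Ng q) sg (subcube n0 k0 l0 d i i')) (S Ng)).
  apply Rle_trans with
    (K * sumn (fun i => sumn (fun i' => cov false i i' + cov true i i') (4 ^ d)) (2 ^ d)).
  { rewrite <- sumn_scal. apply sumn_le. intros i Hi. rewrite <- sumn_scal.
    apply sumn_le. intros i' Hi'. unfold bad_count, cov.
    rewrite <- sumn_scal, <- sumn_plus, <- sumn_scal. apply sumn_le. intros q _.
    apply side_le_covering_excess; auto. }
  assert (Hdc : forall sg, sumn (fun i => sumn (fun i' => cov sg i i') (4 ^ d)) (2 ^ d)
    <= (2 ^ p + 1) * (4 * (C * C) + 1) *
       sumn (fun q => sumn (fun u => excess_at (height Ng q) sg d u) (6 * 2 ^ d)) (S Ng)).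
  { intros sg.
    rewrite (sumn_ext _ (fun i => sumn (fun i' => sumn (fun q => sumn (fun u =>
      indic (covers_at sg d u i) * indic (near_at (height Ng q) d i')
      * excess_at (height Ng q) sg d u) (6 * 2 ^ d)) (S Ng)) (4 ^ d))).
    2:{ intros i _. apply sumn_ext. intros i' _. apply sumn_ext. intros q _.
        unfold covering_excess. rewrite depth_subcube. apply sumn_ext. intros u _.
        rewrite covers_subcube, near_height_subcube. reflexivity. }
    apply sumn_double_counting.
    - intros; apply indic_bounds.
    - intros; apply indic_bounds.
    - intros; apply excess_at_nonneg.
    - intros u. apply count_covers_at.
    - intros q. apply count_near_at. }
  rewrite (sumn_ext _ (fun i => sumn (fun i' => cov false i i') (4 ^ d)
                             + sumn (fun i' => cov true i i') (4 ^ d)))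
    by (intros; apply sumn_plus).
  rewrite sumn_plus.
  pose proof (Rmult_le_compat_l K _ _ HK (Hdc false)).
  pose proof (Rmult_le_compat_l K _ _ HK (Hdc true)). lra.
Qed.

Lemma total_excess_le (Ng Dm : nat) (sg : bool) :
  sumn (fun d => sumn (fun q => sumn (fun u => excess_at (height Ng q) sg d u) (6 * 2 ^ d))
                      (S Ng)) Dm
  <= INR (S Ng) * (INR m * (6 * M * H0)).
Proof.
  rewrite sumn_swap, <- sumn_const. apply sumn_le. intros q _.
  pose proof (window_excess_packing (fun y => f (y, height Ng q)) M (origin sg) H0 6 m Dm
    (Rlt_le _ _ H0_pos) (fun u v => proj2 (bilip_curve_horizontal M _ f Hf u v))) as P.
  replace (INR 6) with 6 in P by (simpl; ring). exact P.
Qed.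

Lemma sum_cubes_le_layers (Ng Dm : nat) (s : list dyadic) : (1 <= Ng)%nat -> NoDup s ->
  (forall Q, In Q s -> in_bad f C eps Q /\ dyadic_subset Q (n0, k0, l0)) ->
  (forall Q, In Q s -> (depth n0 Q < Dm)%nat) ->
  height_step Ng <= eta * eta * (C * C) * (h0 * h0) / 4 ^ Dm ->
  sum_cubes s <= height_step Ng / (eta * eta * (C * C)) *
    sumn (fun d => sumn (fun i => sumn (fun i' =>
      side (subcube n0 k0 l0 d i i') * bad_count Ng (subcube n0 k0 l0 d i i'))
      (4 ^ d)) (2 ^ d)) Dm.
Proof.
  intros HNg Hnd Hs HDm Hstep.
  pose proof eta_pos. pose proof h0_pos.
  set (c1 := height_step Ng / (eta * eta * (C * C))).
  assert (HE : 0 < eta * eta * (C * C)) by (apply Rmult_lt_0_compat; nra).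
  assert (Hc1 : 0 <= c1) by (apply Rdiv_nonneg; [apply Rlt_le, height_step_pos|]; auto).
  assert (Hdec : forall Q, In Q s -> exists d i i', Q = subcube n0 k0 l0 d i i' /\
                   (i < 2 ^ d)%nat /\ (i' < 4 ^ d)%nat /\ (d < Dm)%nat).
  { intros [[n k] l] HQ.
    destruct (dyadic_subset_subcube n k l n0 k0 l0 (proj2 (Hs _ HQ))) as [d [i [i' [E [Hi Hi']]]]].
    exists d, i, i'. pose proof (HDm _ HQ) as Hd. rewrite E, depth_subcube in Hd. auto. }
  set (F := fun Q => c1 * (side Q * bad_count Ng Q)).
  apply Rle_trans with (lsum F s).
  { apply lsum_le. intros Q HQ.
    destruct (Hdec Q HQ) as [d [i [i' [-> [Hi [Hi' Hd]]]]]].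
    unfold F, c1. apply side_cube_le_bad_count; [exact Hi|exact Hi'|exact HNg|apply (Hs _ HQ)|].
    eapply Rle_trans; [apply Hstep|]. rewrite side_subcube. fold h0.
    assert (4 ^ d <= 4 ^ Dm) by (apply Rle_pow; [lra|lia]).
    assert (0 < 4 ^ d) by (apply pow_lt; lra).
    replace (eta * eta * (C * (h0 / 2 ^ d) * (C * (h0 / 2 ^ d))))
      with (eta * eta * (C * C) * (h0 * h0) * / 4 ^ d)
      by (rewrite pow_4; field; apply pow_nonzero; lra).
    apply Rmult_le_compat_l; [nra|]. apply Rinv_le_contravar; auto. }
  apply Rle_trans with (lsum F (subcubes n0 k0 l0 Dm)).
  { apply lsum_incl_le; auto.
    - intros Q. unfold F. pose proof (side_pos Q). pose proof (bad_count_nonneg Ng Q).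
      apply Rmult_le_pos; nra.
    - intros Q HQ. destruct (Hdec Q HQ) as [d [i [i' [-> [Hi [Hi' Hd]]]]]].
      apply in_subcubes; auto. }
  rewrite lsum_subcubes. unfold F. right.
  rewrite <- sumn_scal. apply sumn_ext. intros d _. rewrite <- sumn_scal.
  apply sumn_ext. intros i _. rewrite <- sumn_scal. reflexivity.
Qed.

Lemma height_step_small (Dm : nat) :
  exists Ng, (1 <= Ng)%nat /\ height_step Ng <= eta * eta * (C * C) * (h0 * h0) / 4 ^ Dm.
Proof.
  pose proof eta_pos. pose proof h0_pos. assert (H4 : 0 < 4 ^ Dm) by (apply pow_lt; lra).
  assert (HE : 0 < eta * eta * (C * C)) by (apply Rmult_lt_0_compat; nra).
  destruct (nat_above ((1 + 4 * (C * C)) * 4 ^ Dm / (eta * eta * (C * C)))) as [n Hn].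
  exists (S n). split; [lia|]. pose proof (pos_INR n).
  assert (Hn' : (1 + 4 * (C * C)) * 4 ^ Dm <= INR (S n) * (eta * eta * (C * C))).
  { apply Rmult_lt_compat_r with (r := eta * eta * (C * C)) in Hn; [|lra].
    unfold Rdiv in Hn. rewrite Rmult_assoc, Rinv_l, Rmult_1_r in Hn by lra.
    rewrite S_INR. nra. }
  rewrite S_INR in *. unfold height_step, height_range. rewrite S_INR.
  replace ((1 + 4 * (C * C)) * (h0 * h0) / (INR n + 1))
    with ((1 + 4 * (C * C)) * 4 ^ Dm * (h0 * h0 / ((INR n + 1) * 4 ^ Dm))) by (field; lra).
  replace (eta * eta * (C * C) * (h0 * h0) / 4 ^ Dm)
    with ((INR n + 1) * (eta * eta * (C * C)) * (h0 * h0 / ((INR n + 1) * 4 ^ Dm)))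
    by (field; lra).
  apply Rmult_le_compat_r; [apply Rdiv_nonneg; nra|exact Hn'].
Qed.

Lemma height_step_mul_le (Ng : nat) : (1 <= Ng)%nat ->
  height_step Ng * INR (S Ng) <= 2 * height_range.
Proof.
  intros HNg. pose proof h0_pos. assert (HN : 1 <= INR Ng) by (apply (le_INR 1); lia).
  assert (0 < height_range) by (unfold height_range; nra).
  unfold height_step. rewrite S_INR.
  replace (height_range / INR Ng * (INR Ng + 1)) with (height_range + height_range / INR Ng)
    by (field; lra).
  assert (height_range / INR Ng <= height_range)
    by (apply Rmult_le_reg_r with (INR Ng); [lra|]; field_simplify; nra).
  lra.
Qed.

Lemma layers_le_excess (Ng Dm : nat) :
  sumn (fun d => sumn (fun i => sumn (fun i' =>
    side (subcube n0 k0 l0 d i i') * bad_count Ng (subcube n0 k0 l0 d i i'))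
    (4 ^ d)) (2 ^ d)) Dm
  <= / (flat_threshold M rho_flat * 2 ^ p) * ((2 ^ p + 1) * (4 * (C * C) + 1)) *
     (2 * (INR (S Ng) * (INR m * (6 * M * H0)))).
Proof.
  pose proof (pow2_pos p). pose proof flat_threshold_pos.
  eapply Rle_trans; [apply sumn_le; intros d _; apply layer_le_excess|].
  rewrite sumn_scal, sumn_plus.
  pose proof (total_excess_le Ng Dm false). pose proof (total_excess_le Ng Dm true).
  apply Rmult_le_compat_l; [|lra].
  apply Rmult_le_pos; [left; apply Rinv_0_lt_compat|]; nra.
Qed.

Definition packing_constant : R :=
  2 * (1 + 4 * (C * C)) / (eta * eta * (C * C)) * / (flat_threshold M rho_flat * 2 ^ p)
  * ((2 ^ p + 1) * (4 * (C * C) + 1)) * (2 * (INR m * (6 * M * 2 ^ p))).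

Lemma packing_bound (s : list dyadic) : NoDup s ->
  (forall Q, In Q s -> in_bad f C eps Q /\ dyadic_subset Q (n0, k0, l0)) ->
  sum_cubes s <= packing_constant * h0 ^ 3.
Proof.
  intros Hnd Hs.
  set (Dm := S (list_max (map (depth n0) s))).
  assert (HDm : forall Q, In Q s -> (depth n0 Q < Dm)%nat).
  { intros Q HQ. pose proof (proj1 (list_max_le (map (depth n0) s) _) (Nat.le_refl _)) as HF.
    rewrite Forall_forall in HF. specialize (HF _ (in_map _ _ _ HQ)). unfold Dm. lia. }
  destruct (height_step_small Dm) as [Ng [HNg Hstep]].
  pose proof eta_pos. pose proof h0_pos. pose proof (pow2_pos p). pose proof flat_threshold_pos.
  pose proof (pos_INR m). pose proof (height_step_pos Ng HNg).
  assert (HE : 0 < eta * eta * (C * C)) by (apply Rmult_lt_0_compat; nra).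
  set (K := / (flat_threshold M rho_flat * 2 ^ p) * ((2 ^ p + 1) * (4 * (C * C) + 1))).
  assert (HK : 0 <= K) by (unfold K; apply Rmult_le_pos; [left; apply Rinv_0_lt_compat|]; nra).
  set (W := INR m * (6 * M * H0)).
  assert (HW : 0 <= W).
  { pose proof H0_pos. unfold W. apply Rmult_le_pos; [lra|]. apply Rmult_le_pos; lra. }
  eapply Rle_trans; [apply (sum_cubes_le_layers Ng Dm s); auto|].
  eapply Rle_trans.
  { apply Rmult_le_compat_l; [apply Rdiv_nonneg; lra|apply (layers_le_excess Ng Dm)]. }
  fold K W. replace (height_step Ng / (eta * eta * (C * C)) * (K * (2 * (INR (S Ng) * W))))
    with (height_step Ng * INR (S Ng) * (2 * K * W / (eta * eta * (C * C)))) by (field; lra).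
  eapply Rle_trans.
  { apply Rmult_le_compat_r; [apply Rdiv_nonneg; nra|apply (height_step_mul_le Ng HNg)]. }
  right. unfold packing_constant, height_range, K, W, H0. field. nra.
Qed.

End Packing.

Theorem proposition4p3 :
  forall (M eps C : R), 1 <= M -> 0 < eps <= 1 -> 1 <= C ->
  exists C' : R, forall f : Wpt -> Hpt, bilipschitz M f ->
    forall (Q0 : dyadic) (s : list dyadic), NoDup s ->
      (forall Q, In Q s -> in_bad f C eps Q /\ dyadic_subset Q Q0) ->
      sum_cubes s <= C' * side Q0 ^ 3.
Proof.
  intros M eps C HM Heps HC.
  destruct (nat_above (6 * C)) as [p Hp].
  assert (Hp' : 6 * C <= 2 ^ p) by (pose proof (INR_le_pow2 p); lra).
  set (rho := rho_flat eps C p).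
  assert (Hrho : 0 < rho * rho)
    by (destruct (rho_flat_bounds eps C p Heps HC Hp'); apply Rmult_lt_0_compat; auto).
  destruct (nat_above (16 * (M * M) / (rho * rho))) as [m Hm].
  assert (Hm' : 16 * (M * M) <= INR (2 ^ m) * (rho * rho)).
  { rewrite INR_pow2. pose proof (INR_le_pow2 m).
    apply Rmult_lt_compat_r with (r := rho * rho) in Hm; [|lra].
    unfold Rdiv in Hm. rewrite Rmult_assoc, Rinv_l, Rmult_1_r in Hm by lra. nra. }
  exists (packing_constant M eps C p m).
  intros f Hf [[n0 k0] l0] s Hnd Hs.
  exact (packing_bound M eps C p m HM Heps HC Hp' Hm' f Hf n0 k0 l0 s Hnd Hs).
Qed.
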